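(* Assume $\tau_h\le(1+1/(3\boldsymbol\kappa^2))^{1/4}$ and $\theta_h\le1/(4\boldsymbol\kappa)$. Then for every $u:\Omega_h\to\mathbb R$, $$\mathcal F'_h(u)\le17\,\mathcal F_h(u).$$
   Context: Let $\mathbf D:\mathbb R^2\to S_2^+$ be continuous and $\mathbb Z^2$-periodic. Set $\mathbf M(z):=\det(\mathbf D(z))^{1/2}\mathbf D(z)^{-1}$, $\|e\|_M:=\sqrt{\langle e,Me\rangle}$, $\kappa(M):=\sqrt{\|M\|\|M^{-1}\|}$, and $\boldsymbol\kappa:=\max_z\kappa(\mathbf D(z))$. Let $h=1/n$ and $\Omega_h:=[0,1)^2\cap h\mathbb Z^2$. Functions on $\Omega_h$ are extended $\mathbb Z^2$-periodically to $h\mathbb Z^2$. Constants: $\tau(p,q)$ is the least $\tau\ge1$ with $\tau^{-2}\mathbf M(p)\le\mathbf M(q)\le\tau^2\mathbf M(p)$. For any $h>0$, $\tau_h:=\max\{\tau(p,q):\|p-q\|\le2\boldsymbol\kappa h\}$, $\theta_h:=\boldsymbol\kappa(3+9\tau_{2h}^2)(\tau_{2h}^2-1)$, and $\theta_0:=1/(4\boldsymbol\kappa)$. Reduced bases: an $M$-reduced basis is a basis $(e_1,e_2)$ of $\mathbb Z^2$ with $\|e_1\|_M$ minimal over $\mathbb Z^2\setminus\{0\}$ and $\|e_2\|_M$ minimal over $\mathbb Z^2\setminus e_1\mathbb Z$; $\mu(M):=|\langle e_1,Me_2\rangle|$. $V(p):=\{\pm e_0,\pm e_1,\pm e_2\}$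 for an $\mathbf M(p)$-obtuse superbase $(e_0,e_1,e_2)$ of $\mathbb Z^2$ (sum zero, $(e_1,e_2)$ basis, pairwise $\mathbf M(p)$-scalar products $\le0$). Stencils: if $\mu(\mathbf M(p))\le\theta_0$, set $W(p):=\{\pm e,\pm f\}$ and $W'(p):=\{\pm e,\pm f,\pm(e+f),\pm(e-f)\}$ for an $\mathbf M(p)$-reduced basis $(e,f)$ (independent of the choice). Otherwise set $W(p):=W'(p):=V(p)$. Energies: $$\mathcal F_h(u):=\sum_{z\in\Omega_h}\sum_{g\in W(z)}|u(z+hg)-u(z)|^2,\qquad \mathcal F'_h(u):=\sum_{z\in\Omega_h}\sum_{g\in W'(z)}|u(z+hg)-u(z)|^2 .$$ *)

From Stdlib Require Import Reals Lra ZArith List ClassicalEpsilon.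
Import ListNotations.
Open Scope R_scope.

(** Symmetric 2x2 real matrices [[a, b], [b, c]]. *)
Record sym2 := Sym2 { ma : R; mb : R; mc : R }.

Definition bilR (m : sym2) (x1 x2 y1 y2 : R) : R :=
  ma m * x1 * y1 + mb m * (x1 * y2 + x2 * y1) + mc m * x2 * y2.
Definition quadR (m : sym2) (x1 x2 : R) : R := bilR m x1 x2 x1 x2.

(** Positive definite (membership in S_2^+, symmetry being built in). *)
Definition spd (m : sym2) : Prop :=
  forall x1 x2 : R, (x1 <> 0 \/ x2 <> 0) -> 0 < quadR m x1 x2.

Definition det2 (m : sym2) : R := ma m * mc m - mb m * mb m.
Definition scale2 (s : R) (m : sym2) : sym2 := Sym2 (s * ma m) (s * mb m) (s * mc m).
Definition inv2 (m : sym2) : sym2 :=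
  Sym2 (mc m / det2 m) (- mb m / det2 m) (ma m / det2 m).

Definition loewner_le (A B : sym2) : Prop :=
  forall x1 x2 : R, quadR A x1 x2 <= quadR B x1 x2.

(** Generic choice of "the" element satisfying P (unique in all uses below). *)
Definition the_R (P : R -> Prop) : R := epsilon (inhabits 0) P.
Definition sup_R (S : R -> Prop) : R := the_R (is_lub S).
Definition min_R (S : R -> Prop) : R := the_R (fun t => S t /\ forall s, S s -> t <= s).

Definition opnorm (m : sym2) : R :=
  sup_R (fun r => exists x1 x2 : R, x1 * x1 + x2 * x2 = 1 /\
           r = sqrt ((ma m * x1 + mb m * x2) ^ 2 + (mb m * x1 + mc m * x2) ^ 2)).

Definition kappa (m : sym2) : R := sqrt (opnorm m * opnorm (inv2 m)).

Definition field := R -> R -> sym2.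

Definition continuous2 (f : R -> R -> R) : Prop :=
  forall x y eps, 0 < eps -> exists delta, 0 < delta /\
    forall x' y', (x' - x) ^ 2 + (y' - y) ^ 2 < delta ^ 2 ->
      Rabs (f x' y' - f x y) < eps.

Definition field_continuous (D : field) : Prop :=
  continuous2 (fun x y => ma (D x y)) /\ continuous2 (fun x y => mb (D x y)) /\
  continuous2 (fun x y => mc (D x y)).

Definition field_periodic (D : field) : Prop :=
  forall x y, D (x + 1) y = D x y /\ D x (y + 1) = D x y.

Definition Mof (D : field) (x y : R) : sym2 :=
  scale2 (sqrt (det2 (D x y))) (inv2 (D x y)).

(** bold kappa = max_z kappa(D(z)) (a max, hence the sup). *)
Definition kappaB (D : field) : R :=
  sup_R (fun r => exists x y, r = kappa (D x y)).

Definition tau_set (D : field) (p1 p2 q1 q2 : R) (t : R) : Prop :=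
  1 <= t /\ loewner_le (scale2 (/ (t ^ 2)) (Mof D p1 p2)) (Mof D q1 q2) /\
  loewner_le (Mof D q1 q2) (scale2 (t ^ 2) (Mof D p1 p2)).
Definition tau (D : field) (p1 p2 q1 q2 : R) : R := min_R (tau_set D p1 p2 q1 q2).

Definition tau_h (D : field) (h : R) : R :=
  sup_R (fun r => exists p1 p2 q1 q2,
    sqrt ((p1 - q1) ^ 2 + (p2 - q2) ^ 2) <= 2 * kappaB D * h /\ r = tau D p1 p2 q1 q2).

Definition theta_h (D : field) (h : R) : R :=
  kappaB D * (3 + 9 * tau_h D (2 * h) ^ 2) * (tau_h D (2 * h) ^ 2 - 1).
Definition theta0 (D : field) : R := / (4 * kappaB D).

Definition zv := (Z * Z)%type.
Definition zadd (e f : zv) : zv := ((fst e + fst f)%Z, (snd e + snd f)%Z).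
Definition zopp (e : zv) : zv := ((- fst e)%Z, (- snd e)%Z).
Definition zsub (e f : zv) : zv := zadd e (zopp f).
Definition zmul (k : Z) (e : zv) : zv := ((k * fst e)%Z, (k * snd e)%Z).

Definition bilZ (m : sym2) (e f : zv) : R :=
  bilR m (IZR (fst e)) (IZR (snd e)) (IZR (fst f)) (IZR (snd f)).
Definition normM (m : sym2) (e : zv) : R := sqrt (bilZ m e e).

Definition is_basis (e1 e2 : zv) : Prop :=
  (fst e1 * snd e2 - snd e1 * fst e2 = 1 \/ fst e1 * snd e2 - snd e1 * fst e2 = -1)%Z.

Definition reduced_basis (m : sym2) (b : zv * zv) : Prop :=
  let (e1, e2) := b in
  is_basis e1 e2 /\
  (forall v : zv, v <> (0%Z, 0%Z) -> normM m e1 <= normM m v) /\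
  (forall v : zv, (forall k : Z, v <> zmul k e1) -> normM m e2 <= normM m v).

Definition mu_of (m : sym2) (b : zv * zv) : R := Rabs (bilZ m (fst b) (snd b)).

Definition obtuse_superbase (m : sym2) (s : zv * zv * zv) : Prop :=
  let '(e0, e1, e2) := s in
  zadd e0 (zadd e1 e2) = (0%Z, 0%Z) /\ is_basis e1 e2 /\
  bilZ m e0 e1 <= 0 /\ bilZ m e1 e2 <= 0 /\ bilZ m e0 e2 <= 0.

Definition V_of (s : zv * zv * zv) : list zv :=
  let '(e0, e1, e2) := s in
  [e0; zopp e0; e1; zopp e1; e2; zopp e2].

(** Stencils W(p), W'(p), given the chosen reduced basis b and obtuse superbase s
    at p (M = M(p)). *)
Definition W_of (D : field) (m : sym2) (b : zv * zv) (s : zv * zv * zv) : list zv :=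
  if Rle_dec (mu_of m b) (theta0 D)
  then let (e, f) := b in [e; zopp e; f; zopp f]
  else V_of s.
Definition W'_of (D : field) (m : sym2) (b : zv * zv) (s : zv * zv * zv) : list zv :=
  if Rle_dec (mu_of m b) (theta0 D)
  then let (e, f) := b in
       [e; zopp e; f; zopp f; zadd e f; zopp (zadd e f); zsub e f; zopp (zsub e f)]
  else V_of s.

Definition sumR (n : nat) (f : nat -> R) : R := fold_right Rplus 0 (map f (seq 0 n)).
Definition sumL (l : list zv) (f : zv -> R) : R := fold_right Rplus 0 (map f l).

(** Grid functions u : Omega_h -> R, with Omega_h indexed by (i, j) in [0,n)^2,
    i.e. z = (i h, j h), h = 1/n; extended Z^2-periodically (indices mod n). *)
Definition uper (n : nat) (u : Z -> Z -> R) (i j : Z) : R :=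
  u (Z.modulo i (Z.of_nat n)) (Z.modulo j (Z.of_nat n)).

Definition energy (n : nat) (St : R -> R -> list zv) (u : Z -> Z -> R) : R :=
  let h := / INR n in
  sumR n (fun i => sumR n (fun j =>
    let zi := Z.of_nat i in let zj := Z.of_nat j in
    sumL (St (INR i * h) (INR j * h)) (fun g =>
      (uper n u (zi + fst g) (zj + snd g) - uper n u zi zj) ^ 2))).

Definition F_h (D : field) (rb : R -> R -> zv * zv) (sb : R -> R -> zv * zv * zv)
  (n : nat) (u : Z -> Z -> R) : R :=
  energy n (fun x y => W_of D (Mof D x y) (rb x y) (sb x y)) u.
Definition F'_h (D : field) (rb : R -> R -> zv * zv) (sb : R -> R -> zv * zv * zv)
  (n : nat) (u : Z -> Z -> R) : R :=
  energy n (fun x y => W'_of D (Mof D x y) (rb x y) (sb x y)) u.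

From Stdlib Require Import Reals ZArith List.
From Stdlib Require Import Lra Lia Psatz ClassicalEpsilon.
Import ListNotations.
Open Scope R_scope.

(** Let (e, f) be the M(p)-reduced basis at a grid point p with mu(M(p)) <= theta_0.
   By the elementary inequality (a - c)^2 <= 2 (a - b)^2 + 2 (b - c)^2, the four
   diagonal differences of u along +-(e + f), +-(e - f) at p are bounded by the
   differences along +-e at p and along +-f at the two neighbours p +- h e.
   The whole point is that +-f (and +-e) belong to the stencil W at those
   neighbours: M at p +- h e is tau_h-close to M(p), and the gap inequality
   T^4 max(|e|^2, |f|^2) < |e|^2 + |f|^2 - 2|<e, f>| (valid when T^4 <= 1 + 1/(3K^2))
   shows that every other primitive vector is strictly longer for the perturbed
   metric, so a reduced basis of it spans +-e, +-f and Selling's obtuse superbase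
   contains them. Each grid point is reached at most |W| <= 6 times as such a
   neighbour, whence F'_h <= 5 F_h + 2 * 6 F_h = 17 F_h. *)

Lemma the_R_spec (P : R -> Prop) : (exists x, P x) -> P (the_R P).
Proof. intro H. unfold the_R. apply epsilon_spec. exact H. Qed.

Lemma sup_R_lub (S : R -> Prop) : bound S -> (exists x, S x) -> is_lub S (sup_R S).
Proof.
  intros Hb He. unfold sup_R. apply the_R_spec.
  destruct (completeness S Hb He) as [m Hm]. exists m; exact Hm.
Qed.

Lemma sup_R_ub (S : R -> Prop) r : bound S -> S r -> r <= sup_R S.
Proof.
  intros Hb Hr. destruct (sup_R_lub S Hb (ex_intro _ r Hr)) as [Hub _]. exact (Hub r Hr).
Qed.

Lemma sup_R_le (S : R -> Prop) K :
  (exists x, S x) -> (forall r, S r -> r <= K) -> sup_R S <= K.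
Proof.
  intros He Hk. assert (Hb : bound S) by (exists K; exact Hk).
  destruct (sup_R_lub S Hb He) as [_ Hlub]. exact (Hlub K Hk).
Qed.

Definition image_norm (m : sym2) (v1 v2 : R) : R :=
  sqrt ((ma m * v1 + mb m * v2) ^ 2 + (mb m * v1 + mc m * v2) ^ 2).

(* A crude bound on the operator norm, which makes the defining set bounded. *)
Definition abs_sum (m : sym2) : R := Rabs (ma m) + 2 * Rabs (mb m) + Rabs (mc m).

Lemma abs_sum_nonneg m : 0 <= abs_sum m.
Proof.
  unfold abs_sum. pose proof (Rabs_pos (ma m)). pose proof (Rabs_pos (mb m)).
  pose proof (Rabs_pos (mc m)). lra.
Qed.

Lemma image_norm_unit_le m x1 x2 : x1 * x1 + x2 * x2 = 1 -> image_norm m x1 x2 <= abs_sum m.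
Proof.
  intros Hu. unfold image_norm, abs_sum.
  assert (Hx1 : Rabs x1 <= 1) by (apply Rabs_le; nra).
  assert (Hx2 : Rabs x2 <= 1) by (apply Rabs_le; nra).
  assert (Hlin : forall a b, Rabs (a * x1 + b * x2) <= Rabs a + Rabs b).
  { intros a b. eapply Rle_trans; [apply Rabs_triang|]. rewrite !Rabs_mult.
    pose proof (Rabs_pos a); pose proof (Rabs_pos b). nra. }
  set (X := ma m * x1 + mb m * x2). set (Y := mb m * x1 + mc m * x2).
  pose proof (Hlin (ma m) (mb m)) as HX. pose proof (Hlin (mb m) (mc m)) as HY. fold X Y in HX, HY.
  pose proof (Rabs_pos X). pose proof (Rabs_pos Y).
  rewrite <- (sqrt_square (Rabs (ma m) + 2 * Rabs (mb m) + Rabs (mc m)))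
    by (pose proof (Rabs_pos (ma m)); pose proof (Rabs_pos (mb m)); pose proof (Rabs_pos (mc m)); lra).
  apply sqrt_le_1_alt. rewrite <- (pow2_abs X), <- (pow2_abs Y). nra.
Qed.

Lemma opnorm_ge m x1 x2 : x1 * x1 + x2 * x2 = 1 -> image_norm m x1 x2 <= opnorm m.
Proof.
  intros Hu. apply sup_R_ub.
  - exists (abs_sum m). intros r [y1 [y2 [Hy ->]]]. exact (image_norm_unit_le m y1 y2 Hy).
  - exists x1, x2; split; auto.
Qed.

Lemma opnorm_le m K :
  (forall x1 x2, x1 * x1 + x2 * x2 = 1 -> image_norm m x1 x2 <= K) -> opnorm m <= K.
Proof.
  intros H. apply sup_R_le.
  - exists (image_norm m 1 0), 1, 0. split; [ring|reflexivity].
  - intros r [x1 [x2 [Hu ->]]]. exact (H x1 x2 Hu).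
Qed.

Lemma opnorm_le_abs_sum m : opnorm m <= abs_sum m.
Proof. apply opnorm_le. apply image_norm_unit_le. Qed.

Lemma opnorm_nonneg m : 0 <= opnorm m.
Proof. eapply Rle_trans; [apply sqrt_pos|apply (opnorm_ge m 1 0); ring]. Qed.

Lemma image_norm_le m v1 v2 : image_norm m v1 v2 <= opnorm m * sqrt (v1 * v1 + v2 * v2).
Proof.
  destruct (Req_dec (v1 * v1 + v2 * v2) 0) as [H0|H0].
  { assert (v1 = 0) by nra. assert (v2 = 0) by nra. subst. unfold image_norm.
    replace ((ma m * 0 + mb m * 0) ^ 2 + (mb m * 0 + mc m * 0) ^ 2) with 0 by ring.
    rewrite sqrt_0. pose proof (opnorm_nonneg m). pose proof (sqrt_pos (0 * 0 + 0 * 0)). nra. }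
  set (s := sqrt (v1 * v1 + v2 * v2)).
  assert (Hs2 : s * s = v1 * v1 + v2 * v2) by (apply sqrt_sqrt; nra).
  assert (Hs : 0 < s) by (apply sqrt_lt_R0; nra).
  assert (Hu : v1 / s * (v1 / s) + v2 / s * (v2 / s) = 1).
  { replace (v1 / s * (v1 / s) + v2 / s * (v2 / s)) with ((v1 * v1 + v2 * v2) / (s * s))
      by (field; lra). rewrite Hs2. field. nra. }
  pose proof (opnorm_ge m _ _ Hu) as Ho.
  assert (Hscale : image_norm m (v1 / s) (v2 / s) = image_norm m v1 v2 / s).
  { unfold image_norm.
    replace ((ma m * (v1 / s) + mb m * (v2 / s)) ^ 2 + (mb m * (v1 / s) + mc m * (v2 / s)) ^ 2)
      with (((ma m * v1 + mb m * v2) ^ 2 + (mb m * v1 + mc m * v2) ^ 2) / (s * s))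
      by (field; lra).
    rewrite sqrt_div_alt, sqrt_square by nra. reflexivity. }
  rewrite Hscale in Ho. apply (Rmult_le_compat_r s) in Ho; [|lra].
  unfold Rdiv in Ho. rewrite Rmult_assoc, Rinv_l, Rmult_1_r in Ho by lra. exact Ho.
Qed.

(* By Cauchy-Schwarz, v.mv <= ||m|| |v|^2. *)
Lemma quad_le_opnorm m v1 v2 : quadR m v1 v2 <= opnorm m * (v1 * v1 + v2 * v2).
Proof.
  pose proof (sqrt_cauchy v1 v2 (ma m * v1 + mb m * v2) (mb m * v1 + mc m * v2)) as Hcs.
  replace (v1 * (ma m * v1 + mb m * v2) + v2 * (mb m * v1 + mc m * v2)) with (quadR m v1 v2)
    in Hcs by (unfold quadR, bilR; ring).
  replace (sqrt ((ma m * v1 + mb m * v2)² + (mb m * v1 + mc m * v2)²))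
    with (image_norm m v1 v2) in Hcs by (unfold image_norm, Rsqr; f_equal; ring).
  unfold Rsqr in Hcs. pose proof (image_norm_le m v1 v2) as Himg.
  pose proof (sqrt_pos (v1 * v1 + v2 * v2)) as Hs.
  rewrite <- (sqrt_sqrt (v1 * v1 + v2 * v2)) by nra. nra.
Qed.

Lemma spd_pos m : spd m -> 0 < ma m /\ 0 < det2 m /\ 0 < mc m.
Proof.
  intros H. pose proof (H 1 0 (or_introl R1_neq_R0)) as H1.
  unfold quadR, bilR in H1. assert (Ha : 0 < ma m) by nra.
  pose proof (H (- mb m) (ma m) (or_intror (Rgt_not_eq _ _ Ha))) as H2.
  unfold quadR, bilR in H2. unfold det2.
  assert (0 < ma m * (ma m * mc m - mb m * mb m)) by nra.
  assert (0 < ma m * mc m - mb m * mb m) by nra.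
  split; [lra|split; [lra|nra]].
Qed.

Lemma quad_spd_nonneg m v1 v2 : spd m -> 0 <= quadR m v1 v2.
Proof.
  intros H. destruct (Req_dec v1 0) as [->|H1]; [destruct (Req_dec v2 0) as [->|H2]|].
  - unfold quadR, bilR. lra.
  - left; apply H; auto.
  - left; apply H; auto.
Qed.

Lemma quad_scale s m v1 v2 : quadR (scale2 s m) v1 v2 = s * quadR m v1 v2.
Proof. unfold quadR, bilR, scale2; simpl; ring. Qed.

Lemma quad_inv2 m v1 v2 : 0 < det2 m -> quadR (inv2 m) v1 v2 = quadR m v2 (- v1) / det2 m.
Proof. intros Hd. unfold quadR, bilR, inv2; simpl. field. lra. Qed.

Lemma quad_perp_product m v1 v2 :
  quadR m v1 v2 * quadR m (- v2) v1 =
  det2 m * ((v1 * v1 + v2 * v2) * (v1 * v1 + v2 * v2))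
  + (mb m * (v1 * v1 - v2 * v2) + (mc m - ma m) * v1 * v2) ^ 2.
Proof. unfold quadR, bilR, det2. ring. Qed.

(* The metric attached to a diffusion tensor; [Mof D x y] is [metric (D x y)]. *)
Definition metric (m : sym2) : sym2 := scale2 (sqrt (det2 m)) (inv2 m).

Lemma metric_nonneg m v1 v2 : spd m -> 0 <= quadR (metric m) v1 v2.
Proof.
  intros Hm. destruct (spd_pos m Hm) as [_ [Hd _]]. unfold metric.
  rewrite quad_scale, quad_inv2 by exact Hd.
  apply Rmult_le_pos; [apply sqrt_pos|].
  unfold Rdiv. apply Rmult_le_pos; [apply quad_spd_nonneg, Hm|left; apply Rinv_0_lt_compat, Hd].
Qed.

Lemma det_metric m : spd m -> det2 (metric m) = 1.
Proof.
  intros Hm. destruct (spd_pos m Hm) as [_ [Hd _]].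
  set (d := det2 m) in *. assert (Hs : sqrt d * sqrt d = d) by (apply sqrt_sqrt; lra).
  unfold metric, scale2, inv2. unfold det2 at 1; simpl. fold d.
  transitivity (sqrt d * sqrt d * (ma m * mc m - mb m * mb m) / (d * d)); [field; lra|].
  change (ma m * mc m - mb m * mb m) with d. rewrite Hs. field. lra.
Qed.

(* ||D^-1|| <= ||D|| / det D (the inverse of a 2x2 matrix is its rotated copy / det). *)
Lemma det_opnorm_inv_le m : spd m -> det2 m * opnorm (inv2 m) <= opnorm m.
Proof.
  intros Hm. destruct (spd_pos m Hm) as [_ [Hd _]].
  assert (Hbound : opnorm (inv2 m) <= opnorm m / det2 m).
  { apply opnorm_le. intros x1 x2 Hu.
    pose proof (opnorm_ge m (- x2) x1 ltac:(lra)) as H.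
    assert (E : image_norm (inv2 m) x1 x2 = image_norm m (- x2) x1 / det2 m).
    { unfold image_norm.
      replace ((ma (inv2 m) * x1 + mb (inv2 m) * x2) ^ 2 + (mb (inv2 m) * x1 + mc (inv2 m) * x2) ^ 2)
        with (((ma m * - x2 + mb m * x1) ^ 2 + (mb m * - x2 + mc m * x1) ^ 2)
              / (det2 m * det2 m)) by (unfold inv2; simpl; field; lra).
      rewrite sqrt_div_alt, sqrt_square by nra. reflexivity. }
    rewrite E. unfold Rdiv. apply Rmult_le_compat_r; [left; apply Rinv_0_lt_compat|]; lra. }
  apply (Rmult_le_compat_l (det2 m)) in Hbound; [|lra].
  replace (det2 m * (opnorm m / det2 m)) with (opnorm m) in Hbound by (field; lra). exact Hbound.
Qed.

Lemma metric_upper m v1 v2 : spd m -> quadR (metric m) v1 v2 <= kappa m * (v1 * v1 + v2 * v2).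
Proof.
  intros Hm. destruct (spd_pos m Hm) as [_ [Hd _]].
  pose proof (det_opnorm_inv_le m Hm) as Hinv.
  pose proof (opnorm_nonneg (inv2 m)) as HN2. pose proof (sqrt_pos (det2 m)) as Hsd.
  assert (Hs : sqrt (det2 m) * opnorm (inv2 m) <= kappa m).
  { unfold kappa.
    replace (sqrt (det2 m) * opnorm (inv2 m))
      with (sqrt (det2 m * (opnorm (inv2 m) * opnorm (inv2 m))))
      by (rewrite sqrt_mult_alt, sqrt_square by lra; reflexivity).
    apply sqrt_le_1_alt. nra. }
  unfold metric. rewrite quad_scale.
  pose proof (quad_le_opnorm (inv2 m) v1 v2). nra.
Qed.

(* Lower bound: |v|^4 <= q(v) q(v^perp) <= q(v) kappa |v|^2, as det M = 1. *)
Lemma metric_lower m v1 v2 : spd m -> v1 * v1 + v2 * v2 <= kappa m * quadR (metric m) v1 v2.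
Proof.
  intros Hm. set (s := v1 * v1 + v2 * v2).
  pose proof (quad_perp_product (metric m) v1 v2) as Hprod. rewrite det_metric in Hprod by exact Hm.
  pose proof (metric_upper m (- v2) v1 Hm) as Hperp.
  replace (- v2 * - v2 + v1 * v1) with s in Hperp by (unfold s; ring).
  pose proof (metric_nonneg m v1 v2 Hm). pose proof (metric_nonneg m (- v2) v1 Hm).
  pose proof (pow2_ge_0 (mb (metric m) * (v1 * v1 - v2 * v2) + (mc (metric m) - ma (metric m)) * v1 * v2)).
  assert (Hs : 0 <= s) by (unfold s; nra). fold s in Hprod.
  destruct (Req_dec s 0) as [Hs0|Hs0].
  - rewrite Hs0. unfold kappa. pose proof (sqrt_pos (opnorm m * opnorm (inv2 m))). nra.
  - nra.
Qed.

(* Comparing the two bounds at v = (1, 0). *)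
Lemma kappa_ge1 m : spd m -> 1 <= kappa m.
Proof.
  intros Hm. pose proof (metric_upper m 1 0 Hm). pose proof (metric_lower m 1 0 Hm).
  pose proof (sqrt_pos (opnorm m * opnorm (inv2 m))). fold (kappa m) in *. nra.
Qed.

Lemma kappa_sq_le m : spd m -> kappa m * kappa m <= abs_sum m * abs_sum m / det2 m.
Proof.
  intros Hm. destruct (spd_pos m Hm) as [_ [Hd _]].
  pose proof (det_opnorm_inv_le m Hm). pose proof (opnorm_le_abs_sum m).
  pose proof (opnorm_nonneg m). pose proof (opnorm_nonneg (inv2 m)).
  unfold kappa. rewrite sqrt_sqrt by nra.
  apply (Rmult_le_reg_l (det2 m)); [exact Hd|].
  replace (det2 m * (abs_sum m * abs_sum m / det2 m)) with (abs_sum m * abs_sum m) by (field; lra).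
  nra.
Qed.

(** Compactness: kappa(D(z)) is bounded, so bold-kappa is a genuine maximum. *)

Lemma unit_interval_induction (P : R -> R -> Prop) :
  (forall a b c, a <= b -> b <= c -> P a b -> P b c -> P a c) ->
  (forall t, 0 <= t <= 1 -> exists d, 0 < d /\
     forall a b, t - d < a -> a <= t -> t <= b -> b < t + d -> P a b) ->
  P 0 1.
Proof.
  intros Hchain Hloc.
  set (S := fun s => 0 <= s <= 1 /\ P 0 s).
  assert (HS0 : S 0).
  { split; [lra|]. destruct (Hloc 0 ltac:(lra)) as [d [Hd H]]. apply H; lra. }
  assert (Hb : bound S) by (exists 1; intros s [Hs _]; lra).
  destruct (completeness S Hb (ex_intro _ 0 HS0)) as [sg [Hub Hlub]].
  assert (Hsg0 : 0 <= sg) by (apply Hub; exact HS0).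
  assert (Hsg1 : sg <= 1) by (apply Hlub; intros s [Hs _]; lra).
  destruct (Hloc sg ltac:(lra)) as [d [Hd Hnear]].
  assert (Hex : exists s, S s /\ sg - d < s).
  { apply NNPP. intro Hn. assert (sg <= sg - d); [|lra].
    apply Hlub. intros s Hs. destruct (Rle_dec s (sg - d)); auto.
    exfalso; apply Hn; exists s; split; auto; lra. }
  destruct Hex as [s [[Hs01 Hs] Hsd]].
  assert (Hss : s <= sg) by (apply Hub; split; auto).
  destruct (Rlt_dec sg 1) as [Hlt|Hge].
  - set (b := Rmin 1 (sg + d / 2)).
    assert (Hb1 : sg < b) by (unfold b; apply Rmin_glb_lt; lra).
    assert (Hb2 : b <= 1) by (unfold b; apply Rmin_l).
    assert (Hb3 : b < sg + d) by (unfold b; eapply Rle_lt_trans; [apply Rmin_r|lra]).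
    assert (S b) by (split; [lra|]; apply (Hchain 0 s b); try lra; auto; apply Hnear; lra).
    assert (b <= sg) by (apply Hub; auto). lra.
  - replace 1 with sg by lra. apply (Hchain 0 s sg); try lra; auto. apply Hnear; lra.
Qed.

Lemma bounded_on_unit_square (g : R -> R -> R) :
  (forall x0 y0, exists r, 0 < r /\ exists B, forall x y,
      (x - x0) ^ 2 + (y - y0) ^ 2 < r ^ 2 -> g x y <= B) ->
  exists B, forall x y, 0 <= x <= 1 -> 0 <= y <= 1 -> g x y <= B.
Proof.
  intros Hloc.
  assert (Hstrip : forall x0, exists d, 0 < d /\ exists B, forall x y,
            Rabs (x - x0) < d -> 0 <= y <= 1 -> g x y <= B).
  { intros x0.
    set (Q := fun a b => exists d, 0 < d /\ exists B, forall x y,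
                Rabs (x - x0) < d -> a <= y <= b -> g x y <= B).
    change (Q 0 1). apply unit_interval_induction.
    - intros a b c Hab Hbc [d1 [Hd1 [B1 H1]]] [d2 [Hd2 [B2 H2]]].
      exists (Rmin d1 d2); split; [apply Rmin_glb_lt; auto|]. exists (Rmax B1 B2).
      intros x y Hx Hy. destruct (Rle_dec y b).
      + eapply Rle_trans; [apply H1|apply Rmax_l]; [eapply Rlt_le_trans; [exact Hx|apply Rmin_l]|lra].
      + eapply Rle_trans; [apply H2|apply Rmax_r]; [eapply Rlt_le_trans; [exact Hx|apply Rmin_r]|lra].
    - intros t Ht. destruct (Hloc x0 t) as [r [Hr [B HB]]].
      exists (r / 2); split; [lra|]. intros a b Ha1 Ha2 Hb1 Hb2.
      exists (r / 2); split; [lra|]. exists B. intros x y Hx Hy. apply HB.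
      apply Rabs_def2 in Hx. nra. }
  set (P := fun a b => exists B, forall x y, a <= x <= b -> 0 <= y <= 1 -> g x y <= B).
  change (P 0 1). apply unit_interval_induction.
  - intros a b c Hab Hbc [B1 H1] [B2 H2]. exists (Rmax B1 B2).
    intros x y Hx Hy. destruct (Rle_dec x b).
    + eapply Rle_trans; [apply H1|apply Rmax_l]; auto; lra.
    + eapply Rle_trans; [apply H2|apply Rmax_r]; auto; lra.
  - intros t Ht. destruct (Hstrip t) as [d [Hd [B HB]]]. exists d; split; auto.
    intros a b Ha1 Ha2 Hb1 Hb2. exists B. intros x y Hx Hy. apply HB; auto.
    apply Rabs_def1; lra.
Qed.

Lemma kappa_near_bound m0 m e :
  spd m -> 0 < e <= 1 -> e * (abs_sum m0 + 2) <= det2 m0 / 2 ->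
  Rabs (ma m - ma m0) < e -> Rabs (mb m - mb m0) < e -> Rabs (mc m - mc m0) < e ->
  kappa m <= (abs_sum m0 + 4) * (abs_sum m0 + 4) / (det2 m0 / 2).
Proof.
  intros Hm He Hsmall Ha Hb Hc.
  destruct (spd_pos m Hm) as [_ [Hd _]].
  pose proof (abs_sum_nonneg m0) as HS0. pose proof (abs_sum_nonneg m) as HS.
  assert (Hdet : det2 m0 / 2 <= det2 m).
  { assert (Hmul : forall x y, Rabs x < e -> Rabs (x * y) <= e * Rabs y).
    { intros x y Hx. rewrite Rabs_mult. apply Rmult_le_compat_r; [apply Rabs_pos|lra]. }
    set (da := ma m - ma m0) in *. set (db := mb m - mb m0) in *. set (dc := mc m - mc m0) in *.
    assert (Hexp : det2 m - det2 m0 =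
      da * mc m0 + dc * ma m0 + da * dc - 2 * (db * mb m0) - db * db)
      by (unfold da, db, dc, det2; ring).
    pose proof (Hmul da (mc m0) Ha). pose proof (Hmul dc (ma m0) Hc).
    pose proof (Hmul db (mb m0) Hb). pose proof (Hmul da dc Ha). pose proof (Hmul db db Hb).
    pose proof (Rle_abs (- (da * mc m0))). pose proof (Rle_abs (- (dc * ma m0))).
    pose proof (Rle_abs (- (da * dc))). pose proof (Rle_abs (db * mb m0)).
    pose proof (Rle_abs (db * db)). rewrite Rabs_Ropp in *.
    pose proof (Rabs_pos dc). pose proof (Rabs_pos db).
    unfold abs_sum in Hsmall. nra. }
  assert (Hsum : abs_sum m <= abs_sum m0 + 4).
  { unfold abs_sum. pose proof (Rabs_triang_inv (ma m) (ma m0)).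
    pose proof (Rabs_triang_inv (mb m) (mb m0)). pose proof (Rabs_triang_inv (mc m) (mc m0)). lra. }
  pose proof (kappa_sq_le m Hm). pose proof (kappa_ge1 m Hm).
  apply Rle_trans with (abs_sum m * abs_sum m / det2 m); [nra|].
  unfold Rdiv. apply Rmult_le_compat.
  - nra.
  - left; apply Rinv_0_lt_compat; lra.
  - nra.
  - apply Rinv_le_contravar; [|lra]. nra.
Qed.

Section BoundedKappa.
Variable D : field.
Hypothesis HDspd : forall x y, spd (D x y).
Hypothesis HDcont : field_continuous D.
Hypothesis HDper : field_periodic D.

Lemma periodic_shift (k l : Z) x y : D (x + IZR k) (y + IZR l) = D x y.
Proof.
  assert (Hx : forall k x y, D (x + IZR k) y = D x y).
  { clear k l x y. intro k. induction k using Z.peano_ind; intros x y.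
    - now rewrite Rplus_0_r.
    - rewrite succ_IZR, <- Rplus_assoc, (proj1 (HDper _ y)). apply IHk.
    - rewrite <- (IHk x y), <- (proj1 (HDper _ y)). f_equal.
      rewrite <- Z.sub_1_r, minus_IZR. ring. }
  assert (Hy : forall l x y, D x (y + IZR l) = D x y).
  { clear k l x y. intro l. induction l using Z.peano_ind; intros x y.
    - now rewrite Rplus_0_r.
    - rewrite succ_IZR, <- Rplus_assoc, (proj2 (HDper x _)). apply IHl.
    - rewrite <- (IHl x y), <- (proj2 (HDper x _)). f_equal.
      rewrite <- Z.sub_1_r, minus_IZR. ring. }
  rewrite Hx, Hy. reflexivity.
Qed.

Lemma kappa_locally_bounded x0 y0 : exists r, 0 < r /\ exists B, forall x y,
  (x - x0) ^ 2 + (y - y0) ^ 2 < r ^ 2 -> kappa (D x y) <= B.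
Proof.
  set (m0 := D x0 y0). destruct (spd_pos m0 (HDspd x0 y0)) as [_ [Hd0 _]].
  pose proof (abs_sum_nonneg m0) as HS0.
  set (e := Rmin 1 (det2 m0 / (2 * (abs_sum m0 + 2)))).
  assert (He : 0 < e <= 1).
  { unfold e. split; [apply Rmin_glb_lt; [lra|apply Rdiv_lt_0_compat; lra]|apply Rmin_l]. }
  assert (Hsmall : e * (abs_sum m0 + 2) <= det2 m0 / 2).
  { assert (Hmin : e <= det2 m0 / (2 * (abs_sum m0 + 2))) by (unfold e; apply Rmin_r).
    apply (Rmult_le_compat_r (abs_sum m0 + 2)) in Hmin; [|lra].
    replace (det2 m0 / (2 * (abs_sum m0 + 2)) * (abs_sum m0 + 2)) with (det2 m0 / 2) in Hmin
      by (field; lra). exact Hmin. }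
  destruct HDcont as [Ca [Cb Cc]].
  destruct (Ca x0 y0 e ltac:(lra)) as [d1 [Hd1 H1]].
  destruct (Cb x0 y0 e ltac:(lra)) as [d2 [Hd2 H2]].
  destruct (Cc x0 y0 e ltac:(lra)) as [d3 [Hd3 H3]].
  set (r := Rmin d1 (Rmin d2 d3)).
  assert (Hr1 : r <= d1) by apply Rmin_l.
  assert (Hr2 : r <= d2) by (eapply Rle_trans; [apply Rmin_r|apply Rmin_l]).
  assert (Hr3 : r <= d3) by (eapply Rle_trans; [apply Rmin_r|apply Rmin_r]).
  assert (Hr : 0 < r) by (repeat apply Rmin_glb_lt; auto).
  exists r. split; [exact Hr|].
  exists ((abs_sum m0 + 4) * (abs_sum m0 + 4) / (det2 m0 / 2)). intros x y Hxy.
  apply (kappa_near_bound m0 _ e); auto; [apply H1|apply H2|apply H3]; nra.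
Qed.

(* By periodicity it suffices to bound kappa on the unit square. *)
Lemma kappa_bounded : exists B, forall x y, kappa (D x y) <= B.
Proof.
  destruct (bounded_on_unit_square (fun x y => kappa (D x y)) kappa_locally_bounded) as [B HB].
  exists B. intros x y.
  pose proof (base_Int_part x) as Hx. pose proof (base_Int_part y) as Hy.
  replace (D x y) with (D (x - IZR (Int_part x) + IZR (Int_part x))
                          (y - IZR (Int_part y) + IZR (Int_part y))) by (f_equal; ring).
  rewrite periodic_shift. apply HB; lra.
Qed.

Lemma kappaB_ge x y : kappa (D x y) <= kappaB D.
Proof.
  destruct kappa_bounded as [B HB]. unfold kappaB. apply sup_R_ub.
  - exists B. intros r [x' [y' ->]]. apply HB.
  - exists x, y; reflexivity.
Qed.

Lemma kappaB_ge1 : 1 <= kappaB D.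
Proof. eapply Rle_trans; [apply (kappa_ge1 _ (HDspd 0 0))|apply kappaB_ge]. Qed.

End BoundedKappa.

Lemma le_sq_mul_of_approx t0 X Y : 0 <= Y -> 0 <= t0 ->
  (forall e, 0 < e -> exists s, s < t0 + e /\ t0 <= s /\ X <= s ^ 2 * Y) -> X <= t0 ^ 2 * Y.
Proof.
  intros HY Ht H. destruct (Rle_dec X (t0 ^ 2 * Y)) as [|Hn]; auto. exfalso.
  destruct (Req_dec Y 0) as [HY0|HY0].
  { destruct (H 1 ltac:(lra)) as [s [_ [_ Hs]]]. rewrite HY0 in *. lra. }
  set (g := X - t0 ^ 2 * Y).
  set (e := Rmin 1 (g / (2 * (2 * t0 + 1) * Y))).
  assert (He : 0 < e).
  { unfold e; apply Rmin_glb_lt; [lra|apply Rdiv_lt_0_compat; unfold g; nra]. }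
  assert (He1 : e <= 1) by apply Rmin_l.
  assert (He2 : e * (2 * (2 * t0 + 1) * Y) <= g).
  { assert (Hmin : e <= g / (2 * (2 * t0 + 1) * Y)) by apply Rmin_r.
    apply (Rmult_le_compat_r (2 * (2 * t0 + 1) * Y)) in Hmin; [|nra].
    replace (g / (2 * (2 * t0 + 1) * Y) * (2 * (2 * t0 + 1) * Y)) with g in Hmin by (field; nra).
    exact Hmin. }
  destruct (H e He) as [s [Hs1 [Hs2 Hs3]]].
  assert (s ^ 2 <= t0 ^ 2 + e * (2 * t0 + 1)) by nra.
  assert (s ^ 2 * Y <= (t0 ^ 2 + e * (2 * t0 + 1)) * Y) by nra.
  unfold g in He2. nra.
Qed.

Section Tau.
Variable D : field.
Hypothesis HDspd : forall x y, spd (D x y).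
Hypothesis HDcont : field_continuous D.
Hypothesis HDper : field_periodic D.

Lemma Mof_nonneg x y v1 v2 : 0 <= quadR (Mof D x y) v1 v2.
Proof. exact (metric_nonneg _ v1 v2 (HDspd x y)). Qed.

Lemma Mof_bounds x y v1 v2 :
  v1 * v1 + v2 * v2 <= kappaB D * quadR (Mof D x y) v1 v2 /\
  quadR (Mof D x y) v1 v2 <= kappaB D * (v1 * v1 + v2 * v2).
Proof.
  pose proof (metric_lower (D x y) v1 v2 (HDspd x y)).
  pose proof (metric_upper (D x y) v1 v2 (HDspd x y)).
  pose proof (kappaB_ge D HDspd HDcont HDper x y).
  pose proof (kappa_ge1 _ (HDspd x y)). pose proof (Mof_nonneg x y v1 v2).
  change (Mof D x y) with (metric (D x y)) in *. split; nra.
Qed.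

Definition tau_ok p1 p2 q1 q2 t := 1 <= t /\ forall v1 v2,
  quadR (Mof D p1 p2) v1 v2 <= t ^ 2 * quadR (Mof D q1 q2) v1 v2 /\
  quadR (Mof D q1 q2) v1 v2 <= t ^ 2 * quadR (Mof D p1 p2) v1 v2.

Lemma tau_set_ok p1 p2 q1 q2 t : tau_set D p1 p2 q1 q2 t <-> tau_ok p1 p2 q1 q2 t.
Proof.
  unfold tau_set, tau_ok, loewner_le.
  split; intros [H1 H2]; split; auto; [intros v1 v2|split; intros v1 v2].
  all: assert (Ht2 : 0 < t ^ 2) by nra.
  - destruct H2 as [H2 H3]. specialize (H2 v1 v2). specialize (H3 v1 v2).
    rewrite quad_scale in H2, H3. split; [|exact H3].
    apply (Rmult_le_compat_l (t ^ 2)) in H2; [|lra].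
    rewrite <- Rmult_assoc, Rinv_r, Rmult_1_l in H2 by lra. exact H2.
  - rewrite quad_scale. apply (Rmult_le_reg_l (t ^ 2)); [exact Ht2|].
    rewrite <- Rmult_assoc, Rinv_r, Rmult_1_l by lra. apply H2.
  - rewrite quad_scale. apply H2.
Qed.

(* bold-kappa is an admissible value for tau(p,q), since all metrics are kappa-Euclidean. *)
Lemma tau_ok_K p1 p2 q1 q2 : tau_ok p1 p2 q1 q2 (kappaB D).
Proof.
  pose proof (kappaB_ge1 D HDspd HDcont HDper) as HK.
  split; [exact HK|]. intros v1 v2.
  pose proof (Mof_bounds p1 p2 v1 v2). pose proof (Mof_bounds q1 q2 v1 v2).
  pose proof (Mof_nonneg p1 p2 v1 v2). pose proof (Mof_nonneg q1 q2 v1 v2).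
  split; nra.
Qed.

(* tau(p,q) is well defined (the infimum is attained) and at most bold-kappa. *)
Lemma tau_spec p1 p2 q1 q2 :
  tau_ok p1 p2 q1 q2 (tau D p1 p2 q1 q2) /\ tau D p1 p2 q1 q2 <= kappaB D.
Proof.
  set (S := tau_set D p1 p2 q1 q2). set (T := fun r => S (- r)).
  assert (HT : bound T) by (exists (-1); intros r Hr; apply tau_set_ok in Hr; destruct Hr; lra).
  assert (HTn : exists r, T r).
  { exists (- kappaB D). unfold T. rewrite Ropp_involutive. apply tau_set_ok, tau_ok_K. }
  destruct (completeness T HT HTn) as [L [HL1 HL2]].
  set (t0 := - L).
  assert (Hmin : forall s, S s -> t0 <= s).
  { intros s Hs. assert (- s <= L) by (apply HL1; unfold T; rewrite Ropp_involutive; auto).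
    unfold t0; lra. }
  assert (Happ : forall e, 0 < e -> exists s, S s /\ s < t0 + e).
  { intros e He. apply NNPP. intros Hn. assert (L <= L - e); [|lra].
    apply HL2. intros r Hr. destruct (Rle_dec r (L - e)); auto. exfalso.
    apply Hn. exists (- r). split; auto. unfold t0; lra. }
  assert (Ht01 : 1 <= t0).
  { assert (L <= -1); [|unfold t0; lra]. apply HL2. intros r Hr.
    apply tau_set_ok in Hr. destruct Hr; lra. }
  assert (Hok : tau_ok p1 p2 q1 q2 t0).
  { split; auto. intros v1 v2. split; apply le_sq_mul_of_approx;
      try apply Mof_nonneg; try lra; intros e He; destruct (Happ e He) as [s [Hs Hse]];
      exists s; (split; [exact Hse|split; [apply Hmin; exact Hs|]]);
      apply tau_set_ok in Hs; apply Hs. }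
  assert (Hex : exists t, S t /\ forall s, S s -> t <= s)
    by (exists t0; split; auto; apply tau_set_ok; auto).
  destruct (the_R_spec _ Hex) as [H1 H2]. fold (tau D p1 p2 q1 q2) in H1, H2.
  split; [apply tau_set_ok; exact H1|]. apply H2. apply tau_set_ok, tau_ok_K.
Qed.

Lemma tau_le_tau_h h p1 p2 q1 q2 :
  sqrt ((p1 - q1) ^ 2 + (p2 - q2) ^ 2) <= 2 * kappaB D * h ->
  tau D p1 p2 q1 q2 <= tau_h D h.
Proof.
  intros Hd. unfold tau_h. apply sup_R_ub.
  - exists (kappaB D). intros r [a [b [c [d [_ ->]]]]]. apply tau_spec.
  - exists p1, p2, q1, q2. auto.
Qed.

Lemma tau_h_close h p1 p2 q1 q2 :
  sqrt ((p1 - q1) ^ 2 + (p2 - q2) ^ 2) <= 2 * kappaB D * h -> forall v1 v2,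
  quadR (Mof D p1 p2) v1 v2 <= tau_h D h ^ 2 * quadR (Mof D q1 q2) v1 v2 /\
  quadR (Mof D q1 q2) v1 v2 <= tau_h D h ^ 2 * quadR (Mof D p1 p2) v1 v2.
Proof.
  intros Hd v1 v2.
  destruct (tau_spec p1 p2 q1 q2) as [[H1 H2] _].
  pose proof (tau_le_tau_h h p1 p2 q1 q2 Hd) as Hle.
  destruct (H2 v1 v2). pose proof (Mof_nonneg p1 p2 v1 v2). pose proof (Mof_nonneg q1 q2 v1 v2).
  assert (tau D p1 p2 q1 q2 ^ 2 <= tau_h D h ^ 2) by nra.
  split; nra.
Qed.

(* tau_h >= tau(0,0) >= 1. *)
Lemma tau_h_ge1 h : 0 <= h -> 1 <= tau_h D h.
Proof.
  intros Hh. destruct (tau_spec 0 0 0 0) as [[H1 _] _].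
  eapply Rle_trans; [exact H1|]. apply tau_le_tau_h.
  replace ((0 - 0) ^ 2 + (0 - 0) ^ 2) with 0 by ring. rewrite sqrt_0.
  pose proof (kappaB_ge1 D HDspd HDcont HDper). nra.
Qed.

End Tau.

Definition zdet (e f : zv) : Z := (fst e * snd f - snd e * fst f)%Z.

Lemma is_basis_zdet e f : is_basis e f <-> (zdet e f = 1 \/ zdet e f = -1)%Z.
Proof. reflexivity. Qed.

Definition primitive (v : zv) : Prop := exists w, is_basis v w.

(* The four vectors +-e, +-f of a basis: the stencil W of a nearly orthogonal basis. *)
Definition pm2 (e f : zv) : list zv := [e; zopp e; f; zopp f].

Lemma zv_eq_dec (x y : zv) : {x = y} + {x <> y}.
Proof. decide equality; apply Z.eq_dec. Qed.

Lemma In_dec_zv (x : zv) l : In x l \/ ~ In x l.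
Proof. destruct (In_dec zv_eq_dec x l); auto. Qed.

Lemma zopp_involutive v : zopp (zopp v) = v.
Proof. destruct v; unfold zopp; simpl; f_equal; lia. Qed.

Lemma is_basis_sym e f : is_basis e f -> is_basis f e.
Proof. destruct e, f; unfold is_basis; simpl; lia. Qed.

Lemma basis_nonzero e f : is_basis e f -> e <> (0%Z, 0%Z) /\ f <> (0%Z, 0%Z).
Proof. destruct e as [e1 e2], f as [f1 f2]; unfold is_basis; simpl. intros H; split; intro E; inversion E; subst; lia. Qed.

Lemma not_basis_pm u v : v = u \/ v = zopp u -> ~ is_basis u v /\ ~ is_basis v u.
Proof. destruct u as [a b]; intros [->| ->]; unfold is_basis, zopp; simpl; split; nia. Qed.

Lemma basis_decomp e f v : is_basis e f -> exists a b : Z, v = zadd (zmul a e) (zmul b f).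
Proof.
  destruct e as [e1 e2], f as [f1 f2], v as [v1 v2]. unfold is_basis, zadd, zmul; simpl.
  set (d := (e1 * f2 - e2 * f1)%Z). intros H. assert (Hd : (d * d = 1)%Z) by (destruct H as [H|H]; rewrite H; reflexivity).
  exists (d * (v1 * f2 - v2 * f1))%Z, (d * (e1 * v2 - e2 * v1))%Z.
  f_equal; [transitivity (d * d * v1)%Z|transitivity (d * d * v2)%Z];
    try (rewrite Hd; ring); unfold d; ring.
Qed.

Lemma basis_coord_unique e f a b c d : is_basis e f ->
  zadd (zmul a e) (zmul b f) = zadd (zmul c e) (zmul d f) -> a = c /\ b = d.
Proof.
  destruct e as [e1 e2], f as [f1 f2]. unfold is_basis, zadd, zmul; simpl.
  intros Hb H. inversion H as [[H1 H2]].
  assert (X : ((a - c) * (e1 * f2 - e2 * f1) = 0)%Z).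
  { transitivity ((a * e1 + b * f1) * f2 - (a * e2 + b * f2) * f1
                  - ((c * e1 + d * f1) * f2 - (c * e2 + d * f2) * f1))%Z; [ring|].
    rewrite H1, H2. ring. }
  assert (Y : ((b - d) * (e1 * f2 - e2 * f1) = 0)%Z).
  { transitivity (e1 * (a * e2 + b * f2) - e2 * (a * e1 + b * f1)
                  - (e1 * (c * e2 + d * f2) - e2 * (c * e1 + d * f1)))%Z; [ring|].
    rewrite H1, H2. ring. }
  apply Z.mul_eq_0 in X. apply Z.mul_eq_0 in Y. lia.
Qed.

Lemma primitive_mul_unit k u : primitive (zmul k u) -> (k = 1 \/ k = -1)%Z.
Proof.
  intros [w Hw]. destruct u as [u1 u2], w as [w1 w2]. unfold is_basis, zmul in Hw; simpl in Hw.
  destruct Hw as [Hw|Hw].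
  - assert (H : (k * (u1 * w2 - u2 * w1) = 1)%Z) by lia. apply Z.eq_mul_1 in H. tauto.
  - assert (H : (k * (- (u1 * w2 - u2 * w1)) = 1)%Z) by lia. apply Z.eq_mul_1 in H. tauto.
Qed.

Lemma pm2_coords e f a b : is_basis e f ->
  In (zadd (zmul a e) (zmul b f)) (pm2 e f) <->
  ((a = 1 \/ a = -1) /\ b = 0 \/ a = 0 /\ (b = 1 \/ b = -1))%Z.
Proof.
  intros Hb. unfold pm2; simpl. split.
  - assert (E1 : e = zadd (zmul 1 e) (zmul 0 f))
      by (destruct e, f; unfold zadd, zmul; cbn [fst snd]; f_equal; ring).
    assert (E2 : zopp e = zadd (zmul (-1) e) (zmul 0 f))
      by (destruct e, f; unfold zadd, zmul, zopp; cbn [fst snd]; f_equal; ring).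
    assert (E3 : f = zadd (zmul 0 e) (zmul 1 f))
      by (destruct e, f; unfold zadd, zmul; cbn [fst snd]; f_equal; ring).
    assert (E4 : zopp f = zadd (zmul 0 e) (zmul (-1) f))
      by (destruct e, f; unfold zadd, zmul, zopp; cbn [fst snd]; f_equal; ring).
    intros [H|[H|[H|[H|[]]]]];
      [rewrite E1 in H at 1|rewrite E2 in H|rewrite E3 in H at 1|rewrite E4 in H];
      apply basis_coord_unique in H; auto; lia.
  - destruct e, f; unfold zadd, zmul, zopp.
    intros [[[-> | ->] ->]|[-> [-> | ->]]]; cbn [In fst snd];
      [left|right; left|right; right; left|right; right; right; left]; f_equal; ring.
Qed.

Lemma primitive_off_pm2 e f a b : is_basis e f ->
  primitive (zadd (zmul a e) (zmul b f)) -> ~ In (zadd (zmul a e) (zmul b f)) (pm2 e f) ->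
  (a <> 0 /\ b <> 0)%Z.
Proof.
  intros Hb Hp Hn. rewrite (pm2_coords e f a b Hb) in Hn.
  split; intros ->.
  - replace (zadd (zmul 0 e) (zmul b f)) with (zmul b f) in Hp
      by (destruct e, f; unfold zadd, zmul; cbn [fst snd]; f_equal; ring).
    apply primitive_mul_unit in Hp. lia.
  - replace (zadd (zmul a e) (zmul 0 f)) with (zmul a e) in Hp
      by (destruct e, f; unfold zadd, zmul; cbn [fst snd]; f_equal; ring).
    apply primitive_mul_unit in Hp. lia.
Qed.

Definition qZ (m : sym2) (v : zv) : R := bilZ m v v.

Lemma qZ_coords m a b e f : qZ m (zadd (zmul a e) (zmul b f)) =
  IZR a * IZR a * qZ m e + 2 * IZR a * IZR b * bilZ m e f + IZR b * IZR b * qZ m f.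
Proof.
  destruct e, f. unfold qZ, bilZ, bilR, zadd, zmul; simpl. rewrite !plus_IZR, !mult_IZR. ring.
Qed.

Lemma qZ_gram m e f :
  qZ m e * qZ m f - bilZ m e f * bilZ m e f = det2 m * (IZR (zdet e f) * IZR (zdet e f)).
Proof. destruct e, f; unfold qZ, bilZ, bilR, zdet, det2; simpl. rewrite minus_IZR, !mult_IZR. ring. Qed.

Lemma zv_nonzero_sq (v : zv) : v <> (0%Z, 0%Z) ->
  1 <= IZR (fst v) * IZR (fst v) + IZR (snd v) * IZR (snd v).
Proof.
  destruct v as [v1 v2]; simpl. intros H. rewrite <- !mult_IZR, <- plus_IZR. apply IZR_le.
  assert (v1 <> 0 \/ v2 <> 0)%Z by (destruct (Z.eq_dec v1 0); destruct (Z.eq_dec v2 0); subst; auto).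
  nia.
Qed.

Lemma zdet_coords a b c d e f :
  zdet (zadd (zmul a e) (zmul b f)) (zadd (zmul c e) (zmul d f)) = ((a * d - b * c) * zdet e f)%Z.
Proof. destruct e, f; unfold zdet, zadd, zmul; cbn [fst snd]; ring. Qed.

Lemma pm2_incl_of_basis e f e' f' : is_basis e' f' ->
  In e' (pm2 e f) -> In f' (pm2 e f) -> incl (pm2 e f) (pm2 e' f').
Proof.
  intros Hb' Ein Fin x Hx. unfold pm2 in *. cbn [In] in Ein, Fin, Hx |- *.
  destruct Ein as [E|[E|[E|[E|[]]]]]; destruct Fin as [F|[F|[F|[F|[]]]]]; subst e' f';
  destruct Hx as [X|[X|[X|[X|[]]]]]; subst x; rewrite ?zopp_involutive; try tauto; exfalso;
  match goal with
  | H : is_basis ?u ?v |- _ =>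
      first [ apply (proj1 (not_basis_pm u v ltac:(rewrite ?zopp_involutive; tauto))), H
            | apply (proj2 (not_basis_pm v u ltac:(rewrite ?zopp_involutive; tauto))), H ]
  end.
Qed.

Lemma not_multiple_pm e f u : is_basis e f -> u = e \/ u = zopp e -> forall k, f <> zmul k u.
Proof.
  intros Hb Hu k Hk. subst f. destruct e as [a b].
  destruct Hu as [-> | ->]; unfold is_basis, zmul, zopp in Hb; cbn [fst snd] in Hb; nia.
Qed.

Lemma no_superbase_in_pm2 e f e0 e1 e2 : is_basis e f ->
  In e1 (pm2 e f) -> In e2 (pm2 e f) -> In e0 (pm2 e f) ->
  is_basis e1 e2 -> e0 = zopp (zadd e1 e2) -> False.
Proof.
  intros Hb I1 I2 I0 H12 He0.
  destruct (basis_decomp e f e1 Hb) as [a1 [b1 ->]].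
  destruct (basis_decomp e f e2 Hb) as [a2 [b2 ->]].
  destruct (basis_decomp e f e0 Hb) as [a0 [b0 ->]].
  rewrite pm2_coords in I1, I2, I0 by exact Hb.
  assert (Hz : zadd (zmul a0 e) (zmul b0 f) = zadd (zmul (- a1 - a2) e) (zmul (- b1 - b2) f)).
  { rewrite He0. destruct e, f; unfold zadd, zmul, zopp; cbn [fst snd]; f_equal; ring. }
  apply basis_coord_unique in Hz; [|exact Hb].
  rewrite is_basis_zdet in H12, Hb. rewrite zdet_coords in H12.
  destruct Hb as [Hb|Hb]; rewrite Hb in H12; lia.
Qed.

Lemma superbase_gram m e1 e2 :
  bilZ m (zopp (zadd e1 e2)) e1 = - qZ m e1 - bilZ m e1 e2 /\
  bilZ m (zopp (zadd e1 e2)) e2 = - bilZ m e1 e2 - qZ m e2 /\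
  qZ m (zopp (zadd e1 e2)) = qZ m e1 + 2 * bilZ m e1 e2 + qZ m e2.
Proof.
  destruct e1, e2. unfold qZ, bilZ, bilR, zadd, zopp; cbn [fst snd].
  rewrite !opp_IZR, !plus_IZR. repeat split; ring.
Qed.

(* Selling's observation: the vectors of an obtuse superbase are shorter than any
   other primitive vector. *)
Lemma superbase_shortest m e0 e1 e2 v : obtuse_superbase m (e0, e1, e2) -> primitive v ->
  ~ In v (V_of (e0, e1, e2)) -> qZ m e0 <= qZ m v /\ qZ m e1 <= qZ m v /\ qZ m e2 <= qZ m v.
Proof.
  intros [Hs [Hb [H01 [H12 H02]]]] Hp Hn.
  assert (He0 : e0 = zopp (zadd e1 e2)).
  { destruct e0, e1, e2; unfold zadd, zopp in *; cbn [fst snd] in *.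
    inversion Hs. f_equal; lia. }
  subst e0. cbn [V_of] in Hn.
  destruct (basis_decomp e1 e2 v Hb) as [a [b ->]].
  destruct (primitive_off_pm2 e1 e2 a b Hb Hp) as [Ha Hb0].
  { intros Hin. apply Hn. unfold pm2 in Hin. cbn [In] in Hin |- *. tauto. }
  assert (Hab : a <> b).
  { intros <-. replace (zadd (zmul a e1) (zmul a e2)) with (zmul a (zadd e1 e2)) in Hp, Hn
      by (destruct e1, e2; unfold zadd, zmul; cbn [fst snd]; f_equal; ring).
    apply Hn. destruct (primitive_mul_unit a _ Hp) as [-> | ->]; cbn [In].
    - right; left. destruct e1, e2; unfold zadd, zmul, zopp; cbn [fst snd]; f_equal; ring.
    - left. destruct e1, e2; unfold zadd, zmul, zopp; cbn [fst snd]; f_equal; ring. }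
  assert (Ha1 : 1 <= IZR a * IZR a) by (rewrite <- mult_IZR; apply IZR_le; nia).
  assert (Hb1 : 1 <= IZR b * IZR b) by (rewrite <- mult_IZR; apply IZR_le; nia).
  assert (Hab1 : 1 <= (IZR a - IZR b) * (IZR a - IZR b))
    by (rewrite <- minus_IZR, <- mult_IZR; apply IZR_le; nia).
  destruct (superbase_gram m e1 e2) as [E01 [E02 E00]].
  rewrite qZ_coords, E00. rewrite E01 in H01. rewrite E02 in H02.
  (* q(v) = a^2 (q1 + B) + b^2 (q2 + B) + (a - b)^2 (-B), with all three weights >= 0 *)
  set (q1 := qZ m e1) in *. set (q2 := qZ m e2) in *. set (B := bilZ m e1 e2) in *.
  replace (IZR a * IZR a * q1 + 2 * IZR a * IZR b * B + IZR b * IZR b * q2) with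
    (IZR a * IZR a * (q1 + B) + IZR b * IZR b * (q2 + B) + (IZR a - IZR b) * (IZR a - IZR b) * (- B))
    by ring.
  repeat split; nra.
Qed.

Lemma V_of_opp e0 e1 e2 x : In x (V_of (e0, e1, e2)) -> In (zopp x) (V_of (e0, e1, e2)).
Proof. cbn [V_of In]. intros [H|[H|[H|[H|[H|[H|[]]]]]]]; subst; rewrite ?zopp_involutive; tauto. Qed.

(** Stability of a nearly orthogonal reduced basis under a perturbation of the metric. *)

Lemma quad_coords_lower (a b E F B : R) :
  1 <= a * a -> 1 <= b * b -> 4 * Rabs B <= E -> 4 * Rabs B <= F ->
  E + F - 2 * Rabs B <= a * a * E + 2 * a * b * B + b * b * F.
Proof.
  intros Ha Hb HE HF.
  assert (HA : Rabs a * Rabs a = a * a) by (rewrite <- Rabs_mult; apply Rabs_right; nra).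
  assert (HBb : Rabs b * Rabs b = b * b) by (rewrite <- Rabs_mult; apply Rabs_right; nra).
  assert (Hcross : - (2 * (Rabs a * Rabs b) * Rabs B) <= 2 * a * b * B).
  { pose proof (Rle_abs (- (a * b * B))) as H. rewrite Rabs_Ropp, !Rabs_mult in H. lra. }
  pose proof (Rabs_pos a). pose proof (Rabs_pos b). pose proof (Rabs_pos B).
  assert (1 <= Rabs a) by nra. assert (1 <= Rabs b) by nra.
  pose proof (pow2_ge_0 (Rabs a - Rabs b)).
  assert ((a * a - 1) * E + (b * b - 1) * F >= (a * a - 1) * (4 * Rabs B) + (b * b - 1) * (4 * Rabs B))
    by nra.
  nra.
Qed.

Lemma reduced_gap K T E F B :
  1 <= K -> 1 <= K * E -> 1 <= K * F -> E * F - B * B = 1 -> 4 * K * Rabs B <= 1 ->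
  1 <= T -> T ^ 4 <= 1 + / (3 * K ^ 2) -> T ^ 4 * Rmax E F < E + F - 2 * Rabs B.
Proof.
  intros HK HE HF Hdet HB HT HT4.
  set (mn := Rmin E F). set (mx := Rmax E F).
  assert (Hsum : mn + mx = E + F) by (unfold mn, mx, Rmin, Rmax; destruct (Rle_dec E F); lra).
  assert (Hprod : mn * mx = 1 + Rabs B * Rabs B).
  { rewrite <- Rabs_mult, Rabs_right by nra.
    unfold mn, mx, Rmin, Rmax; destruct (Rle_dec E F); lra. }
  assert (HKm : 1 <= K * mn) by (unfold mn, Rmin; destruct (Rle_dec E F); lra).
  pose proof (Rabs_pos B) as HB0.
  assert (Hmn : 4 * Rabs B <= mn) by nra.
  assert (HT4' : 3 * (K * K) * (T ^ 4 - 1) <= 1).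
  { replace (/ (3 * K ^ 2)) with (1 / (3 * (K * K))) in HT4 by (field; lra).
    apply (Rmult_le_compat_l (3 * (K * K))) in HT4; [|nra].
    replace (3 * (K * K) * (1 + 1 / (3 * (K * K)))) with (3 * (K * K) + 1) in HT4 by (field; lra).
    lra. }
  assert (HT1 : 1 <= T ^ 4) by (rewrite <- (pow1 4); apply pow_incr; lra).
  (* the larger diagonal entry is less than 3K^2/2 times the smaller one *)
  assert (Hratio : 2 * mx < 3 * (K * K) * mn).
  { assert (2 * (mn * mx) < 3 * (K * K) * (mn * mn)) by nra. nra. }
  assert ((T ^ 4 - 1) * (2 * mx) <= mn) by nra.
  destruct (Req_dec (T ^ 4) 1) as [E1|E1]; fold mx; nra.
Qed.

Section Perturbation.
(* (e, f) is a basis whose M-Gram matrix has determinant 1, diagonal entries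
   >= 1/K and off-diagonal entry of size <= 1/(4K) (as for a reduced basis with
   mu <= theta_0), and the metric M' is T^2-equivalent to M. *)
Variables (M M' : sym2) (K T : R) (e f : zv).
Hypothesis Hbasis : is_basis e f.
Hypothesis HK : 1 <= K.
Hypothesis HE : 1 <= K * qZ M e.
Hypothesis HF : 1 <= K * qZ M f.
Hypothesis Hdet : qZ M e * qZ M f - bilZ M e f * bilZ M e f = 1.
Hypothesis HB : 4 * K * Rabs (bilZ M e f) <= 1.
Hypothesis HT : 1 <= T.
Hypothesis HT4 : T ^ 4 <= 1 + / (3 * K ^ 2).
Hypothesis HMM : forall v, qZ M v <= T ^ 2 * qZ M' v /\ qZ M' v <= T ^ 2 * qZ M v.

Lemma off_stencil_longer v : primitive v -> ~ In v (pm2 e f) ->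
  Rmax (qZ M' e) (qZ M' f) < qZ M' v.
Proof.
  intros Hp Hn. destruct (basis_decomp e f v Hbasis) as [a [b ->]].
  destruct (primitive_off_pm2 e f a b Hbasis Hp Hn) as [Ha Hb].
  assert (Ha1 : 1 <= IZR a * IZR a) by (rewrite <- mult_IZR; apply IZR_le; nia).
  assert (Hb1 : 1 <= IZR b * IZR b) by (rewrite <- mult_IZR; apply IZR_le; nia).
  pose proof (Rabs_pos (bilZ M e f)).
  pose proof (quad_coords_lower (IZR a) (IZR b) (qZ M e) (qZ M f) (bilZ M e f) Ha1 Hb1
                ltac:(nra) ltac:(nra)) as Hq.
  rewrite <- qZ_coords in Hq.
  pose proof (reduced_gap K T (qZ M e) (qZ M f) (bilZ M e f) HK HE HF Hdet HB HT HT4) as Hgap.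
  set (v := zadd (zmul a e) (zmul b f)) in *.
  destruct (HMM v) as [Hv _]. destruct (HMM e) as [_ He']. destruct (HMM f) as [_ Hf'].
  assert (HT2 : 1 <= T ^ 2) by nra.
  assert (Hmx : Rmax (qZ M' e) (qZ M' f) <= T ^ 2 * Rmax (qZ M e) (qZ M f)).
  { apply Rmax_lub; (eapply Rle_trans; [eassumption|]);
      apply Rmult_le_compat_l; [lra|apply Rmax_l|lra|apply Rmax_r]. }
  replace (T ^ 4) with (T ^ 2 * T ^ 2) in Hgap by ring.
  assert (Hscaled : T ^ 2 * (T ^ 2 * Rmax (qZ M e) (qZ M f)) < T ^ 2 * qZ M' v) by nra.
  apply Rmult_lt_reg_l in Hscaled; lra.
Qed.

Lemma short_on_stencil v : primitive v -> qZ M' v <= Rmax (qZ M' e) (qZ M' f) -> In v (pm2 e f).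
Proof.
  intros Hp Hq. destruct (In_dec_zv v (pm2 e f)) as [|Hn]; auto.
  pose proof (off_stencil_longer v Hp Hn). lra.
Qed.

Lemma reduced_basis_stencil e' f' :
  (forall v, 0 <= qZ M' v) -> reduced_basis M' (e', f') -> incl (pm2 e f) (pm2 e' f').
Proof.
  intros Hnn [Hb' [Hmin1 Hmin2]].
  assert (Hle : forall v w, normM M' v <= normM M' w -> qZ M' v <= qZ M' w)
    by (intros v w H; apply sqrt_le_0; auto).
  destruct (basis_nonzero e f Hbasis) as [He0 _].
  pose proof (Rmax_l (qZ M' e) (qZ M' f)). pose proof (Rmax_r (qZ M' e) (qZ M' f)).
  assert (Ein : In e' (pm2 e f)).
  { apply short_on_stencil; [exists f'; exact Hb'|].
    pose proof (Hle _ _ (Hmin1 e He0)). lra. }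
  assert (Fin : In f' (pm2 e f)).
  { apply short_on_stencil; [exists e'; apply is_basis_sym, Hb'|].
    unfold pm2 in Ein; cbn [In] in Ein.
    destruct Ein as [E|[E|[E|[E|[]]]]].
    - pose proof (Hle _ _ (Hmin2 f (not_multiple_pm e f e' Hbasis (or_introl (eq_sym E))))). lra.
    - pose proof (Hle _ _ (Hmin2 f (not_multiple_pm e f e' Hbasis (or_intror (eq_sym E))))). lra.
    - pose proof (Hle _ _ (Hmin2 e (not_multiple_pm f e e' (is_basis_sym _ _ Hbasis)
                                      (or_introl (eq_sym E))))). lra.
    - pose proof (Hle _ _ (Hmin2 e (not_multiple_pm f e e' (is_basis_sym _ _ Hbasis)
                                      (or_intror (eq_sym E))))). lra. }
  exact (pm2_incl_of_basis e f e' f' Hb' Ein Fin).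
Qed.

Lemma superbase_stencil e0 e1 e2 :
  obtuse_superbase M' (e0, e1, e2) -> incl (pm2 e f) (V_of (e0, e1, e2)).
Proof.
  intros Hsb. pose proof Hsb as [Hs [Hb12 _]].
  assert (He0 : e0 = zopp (zadd e1 e2)).
  { destruct e0, e1, e2; unfold zadd, zopp in *; cbn [fst snd] in *. inversion Hs. f_equal; lia. }
  assert (Hb01 : is_basis e0 e1).
  { rewrite He0. destruct e1, e2; unfold is_basis, zadd, zopp in *; cbn [fst snd] in *.
    destruct Hb12; [left|right]; nia. }
  assert (Hef_in : forall x, x = e \/ x = f -> In x (V_of (e0, e1, e2))).
  { intros x Hx. destruct (In_dec_zv x (V_of (e0, e1, e2))) as [|Hn]; auto. exfalso.
    assert (Hpx : primitive x)
      by (destruct Hx as [-> | ->]; [exists f; exact Hbasis|exists e; apply is_basis_sym, Hbasis]).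
    assert (Hxm : qZ M' x <= Rmax (qZ M' e) (qZ M' f))
      by (destruct Hx as [-> | ->]; [apply Rmax_l|apply Rmax_r]).
    destruct (superbase_shortest _ _ _ _ x Hsb Hpx Hn) as [S0 [S1 S2]].
    apply (no_superbase_in_pm2 e f e0 e1 e2 Hbasis); auto; apply short_on_stencil; try lra.
    - exists e2; exact Hb12.
    - exists e1; apply is_basis_sym, Hb12.
    - exists e1; exact Hb01. }
  unfold pm2. intros x Hx. cbn [In] in Hx. destruct Hx as [<-|[<-|[<-|[<-|[]]]]];
    auto using V_of_opp.
Qed.

End Perturbation.

Definition lsum {A} (l : list A) (g : A -> R) : R := fold_right Rplus 0 (map g l).

Lemma lsum_cons {A} (x : A) l g : lsum (x :: l) g = g x + lsum l g.
Proof. reflexivity. Qed.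

Lemma lsum_app {A} (l1 l2 : list A) g : lsum (l1 ++ l2) g = lsum l1 g + lsum l2 g.
Proof. induction l1; simpl; [unfold lsum; simpl; ring|]. unfold lsum in *; simpl. rewrite IHl1. ring. Qed.

Lemma lsum_le {A} (l : list A) g1 g2 : (forall x, In x l -> g1 x <= g2 x) -> lsum l g1 <= lsum l g2.
Proof.
  induction l as [|a l IH]; intros H; [unfold lsum; simpl; lra|]. rewrite !lsum_cons.
  pose proof (H a (or_introl eq_refl)).
  assert (lsum l g1 <= lsum l g2) by (apply IH; intros; apply H; right; auto). lra.
Qed.

Lemma lsum_ext {A} (l : list A) g1 g2 : (forall x, In x l -> g1 x = g2 x) -> lsum l g1 = lsum l g2.
Proof.
  induction l; intros H; auto. rewrite !lsum_cons, H by (left; auto). rewrite IHl; auto.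
  intros; apply H; right; auto.
Qed.

Lemma lsum_nonneg {A} (l : list A) g : (forall x, In x l -> 0 <= g x) -> 0 <= lsum l g.
Proof.
  intros H. replace 0 with (lsum l (fun _ => 0)); [apply lsum_le; auto|].
  induction l; auto. rewrite lsum_cons, IHl; [ring|]. intros; apply H; right; auto.
Qed.

Lemma lsum_plus {A} (l : list A) g1 g2 : lsum l (fun x => g1 x + g2 x) = lsum l g1 + lsum l g2.
Proof. induction l; [unfold lsum; simpl; ring|]. rewrite !lsum_cons, IHl. ring. Qed.

Lemma lsum_scal {A} (l : list A) c g : lsum l (fun x => c * g x) = c * lsum l g.
Proof. induction l; [unfold lsum; simpl; ring|]. rewrite !lsum_cons, IHl. ring. Qed.

Lemma lsum_const {A} (l : list A) c : lsum l (fun _ => c) = INR (length l) * c.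
Proof. induction l; [unfold lsum; simpl; ring|]. rewrite lsum_cons, IHl. simpl length. rewrite S_INR. ring. Qed.

Lemma lsum_map {A B} (l : list A) (f : A -> B) g : lsum (map f l) g = lsum l (fun x => g (f x)).
Proof. induction l; auto. simpl. rewrite !lsum_cons, IHl. reflexivity. Qed.

Lemma lsum_flat_map {A B} (l : list A) (F : A -> list B) g :
  lsum (flat_map F l) g = lsum l (fun w => lsum (F w) g).
Proof. induction l; auto. simpl. rewrite lsum_app, lsum_cons, IHl. reflexivity. Qed.

Lemma lsum_prod {A B} (l1 : list A) (l2 : list B) (g : A -> B -> R) :
  lsum l1 (fun a => lsum l2 (fun b => g a b)) = lsum (list_prod l1 l2) (fun p => g (fst p) (snd p)).
Proof. induction l1; auto. simpl. rewrite lsum_cons, lsum_app, IHl1, lsum_map. reflexivity. Qed.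

Lemma lsum_filter {A} (l : list A) (P : A -> bool) g :
  lsum l (fun x => if P x then g x else 0) = lsum (filter P l) g.
Proof. induction l; auto. cbn [filter]. rewrite lsum_cons. destruct (P a); rewrite ?lsum_cons, IHl; ring. Qed.

Section SubSum.
Variables (A B : Type) (decB : forall x y : B, {x = y} + {x <> y}).

Lemma lsum_remove (l : list B) g y : In y l -> (forall z, In z l -> 0 <= g z) ->
  g y + lsum (remove decB y l) g <= lsum l g.
Proof.
  induction l as [|a l IH]; intros Hy Hg; [destruct Hy|]. simpl. rewrite lsum_cons.
  assert (Hg' : forall z, In z l -> 0 <= g z) by (intros; apply Hg; right; auto).
  destruct (decB y a) as [->|Hne].
  - destruct (In_dec decB a l) as [Hin|Hnin].
    + pose proof (IH Hin Hg'). pose proof (Hg a (or_introl eq_refl)). lra.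
    + rewrite notin_remove by auto. lra.
  - rewrite lsum_cons. destruct Hy as [->|Hy]; [congruence|]. pose proof (IH Hy Hg'). lra.
Qed.

Lemma lsum_incl (m l : list B) g : NoDup m -> incl m l -> (forall z, In z l -> 0 <= g z) ->
  lsum m g <= lsum l g.
Proof.
  revert l. induction m as [|y m IH]; intros l Hnd Hinc Hg.
  - apply lsum_nonneg; auto.
  - rewrite lsum_cons. inversion Hnd; subst.
    assert (Hy : In y l) by (apply Hinc; left; auto).
    assert (incl m (remove decB y l)).
    { intros z Hz. apply in_in_remove; [intro; subst; auto|]. apply Hinc; right; auto. }
    assert (lsum m g <= lsum (remove decB y l) g).
    { apply IH; auto. intros z Hz. apply Hg. eapply in_remove; eauto. }
    pose proof (lsum_remove l g y Hy Hg). lra.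
Qed.

Lemma lsum_inj (l1 : list A) (l2 : list B) (phi : A -> B) g : NoDup l1 ->
  (forall x, In x l1 -> In (phi x) l2) -> (forall x y, In x l1 -> In y l1 -> phi x = phi y -> x = y) ->
  (forall z, In z l2 -> 0 <= g z) -> lsum l1 (fun x => g (phi x)) <= lsum l2 g.
Proof.
  intros Hnd Hin Hinj Hg. rewrite <- lsum_map. apply lsum_incl; auto.
  - apply NoDup_map_NoDup_ForallPairs; [exact Hinj|exact Hnd].
  - intros z Hz. apply in_map_iff in Hz. destruct Hz as [x [<- Hx]]. auto.
Qed.

End SubSum.

Lemma NoDup_prod {A B} (l1 : list A) (l2 : list B) : NoDup l1 -> NoDup l2 -> NoDup (list_prod l1 l2).
Proof.
  induction l1 as [|a l1 IH]; intros H1 H2; simpl; [constructor|]. inversion H1; subst.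
  apply NoDup_app; auto.
  - apply NoDup_map_NoDup_ForallPairs; auto. intros x y _ _ Hxy. inversion Hxy; auto.
  - intros [x y] Hx Hy. apply in_map_iff in Hx. destruct Hx as [b [Hb _]]. inversion Hb; subst.
    apply in_prod_iff in Hy. destruct Hy; auto.
Qed.

Definition diff2 (n : nat) (u : Z -> Z -> R) (p : Z * Z) (g : zv) : R :=
  (uper n u (fst p + fst g) (snd p + snd g) - uper n u (fst p) (snd p)) ^ 2.

Definition grid (n : nat) : list (nat * nat) := list_prod (seq 0 n) (seq 0 n).
Definition zp (p : nat * nat) : Z * Z := (Z.of_nat (fst p), Z.of_nat (snd p)).
Definition red (n : nat) (q : Z * Z) : nat * nat :=
  (Z.to_nat (fst q mod Z.of_nat n), Z.to_nat (snd q mod Z.of_nat n)).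

Lemma energy_as_grid_sum n St u : energy n St u =
  lsum (grid n) (fun p => lsum (St (INR (fst p) * / INR n) (INR (snd p) * / INR n)) (diff2 n u (zp p))).
Proof.
  transitivity (lsum (seq 0 n) (fun i => lsum (seq 0 n) (fun j =>
     lsum (St (INR i * / INR n) (INR j * / INR n)) (diff2 n u (zp (i, j)))))); [reflexivity|].
  unfold grid. rewrite lsum_prod. apply lsum_ext. intros [i j] _. reflexivity.
Qed.

Lemma diff2_nonneg n u p g : 0 <= diff2 n u p g.
Proof. apply pow2_ge_0. Qed.

Lemma diff2_red n u q g : (1 <= n)%nat -> diff2 n u q g = diff2 n u (zp (red n q)) g.
Proof.
  intros Hn. unfold diff2, uper, zp, red; simpl.
  rewrite !Z2Nat.id by (apply Z.mod_pos_bound; lia). rewrite !Z.mod_mod by lia.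
  rewrite (Zplus_mod (fst q mod Z.of_nat n)), (Zplus_mod (snd q mod Z.of_nat n)), !Z.mod_mod by lia.
  rewrite <- (Zplus_mod (fst q)), <- (Zplus_mod (snd q)). reflexivity.
Qed.

Lemma diff2_split n u p a b : diff2 n u p (zadd a b) <= 2 * diff2 n u (zadd p a) b + 2 * diff2 n u p a.
Proof.
  unfold diff2, zadd; cbn [fst snd]. rewrite !Z.add_assoc.
  set (x := uper _ _ _ _). set (y := uper _ _ (fst p + fst a) _). set (z := uper _ _ (fst p) _).
  pose proof (pow2_ge_0 (x - 2 * y + z)). nra.
Qed.

Lemma NoDup_grid n : NoDup (grid n).
Proof. apply NoDup_prod; apply seq_NoDup. Qed.

Lemma in_grid n p : In p (grid n) <-> (fst p < n /\ snd p < n)%nat.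
Proof. destruct p as [i j]. unfold grid. rewrite in_prod_iff, !in_seq. simpl. lia. Qed.

Lemma red_in_grid n q : (1 <= n)%nat -> In (red n q) (grid n).
Proof.
  intros Hn. apply in_grid. unfold red; simpl.
  pose proof (Z.mod_pos_bound (fst q) (Z.of_nat n) ltac:(lia)).
  pose proof (Z.mod_pos_bound (snd q) (Z.of_nat n) ltac:(lia)). lia.
Qed.

Lemma red_translate_inj n p p' a : (1 <= n)%nat -> In p (grid n) -> In p' (grid n) ->
  red n (zadd (zp p) a) = red n (zadd (zp p') a) -> p = p'.
Proof.
  intros Hn Hp Hp' H. apply in_grid in Hp. apply in_grid in Hp'.
  destruct p as [i j], p' as [i' j']; unfold red, zadd, zp in H; cbn [fst snd] in *.
  inversion H as [[H1 H2]].
  apply Z2Nat.inj in H1; try (apply Z.mod_pos_bound; lia).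
  apply Z2Nat.inj in H2; try (apply Z.mod_pos_bound; lia).
  assert (E1 : (Z.of_nat i mod Z.of_nat n = Z.of_nat i' mod Z.of_nat n)%Z).
  { replace (Z.of_nat i) with (Z.of_nat i + fst a - fst a)%Z by ring.
    replace (Z.of_nat i') with (Z.of_nat i' + fst a - fst a)%Z by ring.
    rewrite Zminus_mod, H1, <- Zminus_mod. reflexivity. }
  assert (E2 : (Z.of_nat j mod Z.of_nat n = Z.of_nat j' mod Z.of_nat n)%Z).
  { replace (Z.of_nat j) with (Z.of_nat j + snd a - snd a)%Z by ring.
    replace (Z.of_nat j') with (Z.of_nat j' + snd a - snd a)%Z by ring.
    rewrite Zminus_mod, H2, <- Zminus_mod. reflexivity. }
  rewrite !Z.mod_small in E1, E2 by lia. f_equal; lia.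
Qed.

(* (x^(1/4))^4 = x, to read the hypothesis on tau_h as T^4 <= 1 + 1/(3K^2). *)
Lemma Rpower_quarter_pow4 x : 0 < x -> Rpower x (/ 4) ^ 4 = x.
Proof.
  intros Hx. rewrite <- Rpower_pow by (unfold Rpower; apply exp_pos).
  rewrite Rpower_mult. replace (/ 4 * INR 4) with 1 by (simpl; field). apply Rpower_1; auto.
Qed.

Section Grid.
Variable D : field.
Hypothesis HDspd : forall x y, spd (D x y).
Hypothesis HDcont : field_continuous D.
Hypothesis HDper : field_periodic D.
Variable rb : R -> R -> zv * zv.
Hypothesis Hrb : forall x y, reduced_basis (Mof D x y) (rb x y).
Variable sb : R -> R -> zv * zv * zv.
Hypothesis Hsb : forall x y, obtuse_superbase (Mof D x y) (sb x y).
Variable n : nat.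
Hypothesis Hn : (1 <= n)%nat.
Hypothesis Htau : tau_h D (/ INR n) <= Rpower (1 + / (3 * kappaB D ^ 2)) (/ 4).

Definition node (i : nat) : R := INR i * / INR n.
Definition metric_at (p : nat * nat) : sym2 := Mof D (node (fst p)) (node (snd p)).
Definition basis_at (p : nat * nat) : zv * zv := rb (node (fst p)) (node (snd p)).
Definition superbase_at (p : nat * nat) : zv * zv * zv := sb (node (fst p)) (node (snd p)).
Definition stencil (p : nat * nat) : list zv := W_of D (metric_at p) (basis_at p) (superbase_at p).
Definition stencil' (p : nat * nat) : list zv := W'_of D (metric_at p) (basis_at p) (superbase_at p).
(* Points where the reduced basis is nearly orthogonal, so that W(p) = +-e, +-f. *)
Definition small (p : nat * nat) : Prop := mu_of (metric_at p) (basis_at p) <= theta0 D.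

Lemma n_pos : 0 < INR n.
Proof. apply lt_0_INR. lia. Qed.

Lemma metric_at_red q :
  metric_at (red n q) = Mof D (IZR (fst q) * / INR n) (IZR (snd q) * / INR n).
Proof.
  assert (Hsplit : forall z : Z,
    IZR z * / INR n = INR (Z.to_nat (z mod Z.of_nat n)) * / INR n + IZR (z / Z.of_nat n)).
  { intros z. pose proof n_pos.
    rewrite (INR_IZR_INZ (Z.to_nat _)), Z2Nat.id by (apply Z.mod_pos_bound; lia).
    rewrite (Z.div_mod z (Z.of_nat n)) at 1 by lia.
    rewrite plus_IZR, mult_IZR, <- INR_IZR_INZ. field. lra. }
  unfold metric_at, node, red, Mof; cbn [fst snd].
  rewrite (Hsplit (fst q)), (Hsplit (snd q)), periodic_shift by exact HDper. reflexivity.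
Qed.

Lemma constants_facts : 1 <= kappaB D /\ 1 <= tau_h D (/ INR n) /\
  tau_h D (/ INR n) ^ 4 <= 1 + / (3 * kappaB D ^ 2).
Proof.
  pose proof (kappaB_ge1 D HDspd HDcont HDper) as HK.
  assert (Hh : 0 <= / INR n) by (left; apply Rinv_0_lt_compat, n_pos).
  pose proof (tau_h_ge1 D HDspd HDcont HDper _ Hh) as HT.
  split; [exact HK|split; [exact HT|]].
  assert (Hx : 0 < 1 + / (3 * kappaB D ^ 2))
    by (assert (0 < / (3 * kappaB D ^ 2)) by (apply Rinv_0_lt_compat; nra); lra).
  rewrite <- (Rpower_quarter_pow4 _ Hx). apply pow_incr. lra.
Qed.

Lemma nonzero_long p v : v <> (0%Z, 0%Z) -> 1 <= kappaB D * qZ (metric_at p) v.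
Proof.
  intros Hv. pose proof (zv_nonzero_sq v Hv).
  destruct (Mof_bounds D HDspd HDcont HDper (node (fst p)) (node (snd p))
              (IZR (fst v)) (IZR (snd v))) as [B1 _].
  change (qZ (metric_at p) v)
    with (quadR (Mof D (node (fst p)) (node (snd p))) (IZR (fst v)) (IZR (snd v))). lra.
Qed.

(* The Gram matrix of a basis in the metric M (det M = 1) has determinant 1. *)
Lemma gram_det_one p e f : is_basis e f ->
  qZ (metric_at p) e * qZ (metric_at p) f - bilZ (metric_at p) e f * bilZ (metric_at p) e f = 1.
Proof.
  intros Hb. rewrite qZ_gram. change (metric_at p) with (metric (D (node (fst p)) (node (snd p)))).
  rewrite (det_metric _ (HDspd _ _)).
  destruct Hb as [Hb|Hb]; fold (zdet e f) in Hb; rewrite Hb; simpl; ring.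
Qed.

Lemma basis_vector_short p e f : basis_at p = (e, f) -> small p ->
  IZR (fst e) * IZR (fst e) + IZR (snd e) * IZR (snd e) <= 4 * kappaB D * kappaB D.
Proof.
  intros Hef Hsmall. destruct constants_facts as [HK _].
  pose proof (Hrb (node (fst p)) (node (snd p))) as Hr. fold (basis_at p) in Hr. rewrite Hef in Hr.
  destruct Hr as [Hb [Hmin _]]. fold (metric_at p) in Hmin.
  destruct (basis_nonzero e f Hb) as [He0 Hf0].
  set (M := metric_at p) in *.
  pose proof (nonzero_long p e He0) as HE. pose proof (nonzero_long p f Hf0) as HF. fold M in HE, HF.
  pose proof (gram_det_one p e f Hb) as Hdet. fold M in Hdet.
  assert (HEF : qZ M e <= qZ M f) by (apply sqrt_le_0; try nra; apply Hmin, Hf0).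
  assert (HB : 4 * kappaB D * Rabs (bilZ M e f) <= 1).
  { unfold small, mu_of, theta0 in Hsmall. rewrite Hef in Hsmall. cbn [fst snd] in Hsmall.
    fold M in Hsmall. apply (Rmult_le_compat_l (4 * kappaB D)) in Hsmall; [|lra].
    rewrite Rinv_r in Hsmall by lra. exact Hsmall. }
  destruct (Mof_bounds D HDspd HDcont HDper (node (fst p)) (node (snd p))
              (IZR (fst e)) (IZR (snd e))) as [B1 _].
  change (quadR (Mof D (node (fst p)) (node (snd p))) (IZR (fst e)) (IZR (snd e))) with (qZ M e) in B1.
  set (E := qZ M e) in *. set (F := qZ M f) in *. set (B := bilZ M e f) in *.
  pose proof (Rabs_pos B).
  assert (HBsq : B * B = Rabs B * Rabs B) by (rewrite <- Rabs_mult; symmetry; apply Rabs_right; nra).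
  (* E^2 <= E F = 1 + B^2 <= 2, hence E <= 2 *)
  assert (E <= 2) by nra.
  nra.
Qed.

Lemma neighbour_close p a :
  IZR (fst a) * IZR (fst a) + IZR (snd a) * IZR (snd a) <= 4 * kappaB D * kappaB D ->
  sqrt ((node (fst p) - IZR (fst (zadd (zp p) a)) * / INR n) ^ 2 +
        (node (snd p) - IZR (snd (zadd (zp p) a)) * / INR n) ^ 2) <= 2 * kappaB D * / INR n.
Proof.
  intros Ha. destruct constants_facts as [HK _].
  assert (Hh : 0 <= / INR n) by (left; apply Rinv_0_lt_compat, n_pos).
  unfold node, zp, zadd; cbn [fst snd]. rewrite !plus_IZR, <- !INR_IZR_INZ.
  replace ((INR (fst p) * / INR n - (INR (fst p) + IZR (fst a)) * / INR n) ^ 2 +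
           (INR (snd p) * / INR n - (INR (snd p) + IZR (snd a)) * / INR n) ^ 2)
    with ((IZR (fst a) * IZR (fst a) + IZR (snd a) * IZR (snd a)) * (/ INR n * / INR n)) by ring.
  rewrite sqrt_mult_alt by nra. rewrite sqrt_square by exact Hh.
  apply Rmult_le_compat_r; [exact Hh|].
  rewrite <- (sqrt_square (2 * kappaB D)) by lra. apply sqrt_le_1_alt. nra.
Qed.

Lemma neighbour_stencil p e f a : small p -> basis_at p = (e, f) -> (a = e \/ a = zopp e) ->
  incl (pm2 e f) (stencil (red n (zadd (zp p) a))).
Proof.
  intros Hsmall Hef Ha.
  destruct constants_facts as [HK [HT HT4]].
  set (M := metric_at p). set (w := red n (zadd (zp p) a)).
  pose proof (Hrb (node (fst p)) (node (snd p))) as Hr. fold (basis_at p) in Hr. rewrite Hef in Hr.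
  destruct Hr as [Hb _].
  destruct (basis_nonzero e f Hb) as [He0 Hf0].
  assert (HB : 4 * kappaB D * Rabs (bilZ M e f) <= 1).
  { unfold small, mu_of, theta0 in Hsmall. rewrite Hef in Hsmall. cbn [fst snd] in Hsmall.
    apply (Rmult_le_compat_l (4 * kappaB D)) in Hsmall; [|lra].
    rewrite Rinv_r in Hsmall by lra. exact Hsmall. }
  assert (Hsize : IZR (fst a) * IZR (fst a) + IZR (snd a) * IZR (snd a) <= 4 * kappaB D * kappaB D).
  { replace (IZR (fst a) * IZR (fst a) + IZR (snd a) * IZR (snd a))
      with (IZR (fst e) * IZR (fst e) + IZR (snd e) * IZR (snd e))
      by (destruct Ha as [-> | ->]; [reflexivity|destruct e; unfold zopp; cbn [fst snd];
                                       rewrite !opp_IZR; ring]).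
    exact (basis_vector_short p e f Hef Hsmall). }
  assert (HMM : forall v, qZ M v <= tau_h D (/ INR n) ^ 2 * qZ (metric_at w) v /\
                          qZ (metric_at w) v <= tau_h D (/ INR n) ^ 2 * qZ M v).
  { intros v. unfold w. rewrite metric_at_red.
    exact (tau_h_close D HDspd HDcont HDper _ _ _ _ _ (neighbour_close p a Hsize) _ _). }
  assert (Hnn : forall v, 0 <= qZ (metric_at w) v)
    by (intros v; apply (Mof_nonneg D HDspd)).
  pose proof (nonzero_long p e He0) as HE. pose proof (nonzero_long p f Hf0) as HF.
  pose proof (gram_det_one p e f Hb) as Hdet.
  unfold stencil, W_of. fold w.
  destruct (Rle_dec (mu_of (metric_at w) (basis_at w)) (theta0 D)) as [Hs|Hs].
  - pose proof (Hrb (node (fst w)) (node (snd w))) as Hrw. fold (basis_at w) (metric_at w) in Hrw.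
    destruct (basis_at w) as [e' f'].
    exact (reduced_basis_stencil M (metric_at w) _ _ e f Hb HK HE HF Hdet HB HT HT4 HMM e' f' Hnn Hrw).
  - pose proof (Hsb (node (fst w)) (node (snd w))) as Hsw. fold (superbase_at w) (metric_at w) in Hsw.
    destruct (superbase_at w) as [[e0 e1] e2].
    exact (superbase_stencil M (metric_at w) _ _ e f Hb HK HE HF Hdet HB HT HT4 HMM e0 e1 e2 Hsw).
Qed.

End Grid.

Lemma zopp_zadd a b : zopp (zadd a b) = zadd (zopp a) (zopp b).
Proof. destruct a, b; unfold zopp, zadd; cbn [fst snd]; f_equal; lia. Qed.

Lemma point_offset_eq_dec (x y : (nat * nat) * zv) : {x = y} + {x <> y}.
Proof. decide equality; [apply zv_eq_dec|decide equality; apply Nat.eq_dec]. Qed.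

Definition sgn (s : bool) (e : zv) : zv := if s then e else zopp e.

Section Counting.
Variable D : field.
Hypothesis HDspd : forall x y, spd (D x y).
Hypothesis HDcont : field_continuous D.
Hypothesis HDper : field_periodic D.
Variable rb : R -> R -> zv * zv.
Hypothesis Hrb : forall x y, reduced_basis (Mof D x y) (rb x y).
Variable sb : R -> R -> zv * zv * zv.
Hypothesis Hsb : forall x y, obtuse_superbase (Mof D x y) (sb x y).
Variable n : nat.
Hypothesis Hn : (1 <= n)%nat.
Hypothesis Htau : tau_h D (/ INR n) <= Rpower (1 + / (3 * kappaB D ^ 2)) (/ 4).
Variable u : Z -> Z -> R.

Definition local_energy (p : nat * nat) : R := lsum (stencil D rb sb n p) (diff2 n u (zp p)).
Definition local_energy' (p : nat * nat) : R := lsum (stencil' D rb sb n p) (diff2 n u (zp p)).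

Definition smallb (p : nat * nat) : bool :=
  if Rle_dec (mu_of (metric_at D n p) (basis_at rb n p)) (theta0 D) then true else false.

Definition shifted (x : (nat * nat) * bool) : nat * nat :=
  red n (zadd (zp (fst x)) (sgn (snd x) (fst (basis_at rb n (fst x))))).

Definition pair_energy (x : (nat * nat) * bool) : R :=
  diff2 n u (zp (shifted x)) (snd (basis_at rb n (fst x))) +
  diff2 n u (zp (shifted x)) (zopp (snd (basis_at rb n (fst x)))).

Definition extra_energy (p : nat * nat) : R :=
  if smallb p then pair_energy (p, true) + pair_energy (p, false) else 0.

Lemma local_energy_nonneg p : 0 <= local_energy p.
Proof. apply lsum_nonneg. intros; apply diff2_nonneg. Qed.

(* The diagonal differences along +-(e+f), +-(e-f) are controlled by differences
   along +-e at p and along +-f at p +- e. *)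
Lemma local_energy'_le p : local_energy' p <= 5 * local_energy p + 2 * extra_energy p.
Proof.
  unfold local_energy', local_energy, extra_energy, pair_energy, shifted, smallb.
  unfold stencil', stencil, W'_of, W_of. cbn [fst snd].
  destruct (Rle_dec (mu_of (metric_at D n p) (basis_at rb n p)) (theta0 D)) as [Hs|Hs].
  - destruct (basis_at rb n p) as [e f]. cbn [sgn fst snd]. unfold zsub. unfold lsum; simpl.
    set (z := zp p).
    pose proof (diff2_split n u z e f) as A1.
    pose proof (diff2_split n u z (zopp e) (zopp f)) as A2. rewrite <- zopp_zadd in A2.
    pose proof (diff2_split n u z e (zopp f)) as A3.
    pose proof (diff2_split n u z (zopp e) f) as A4.
    rewrite <- (zopp_involutive f) in A4 at 1. rewrite <- zopp_zadd in A4.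
    rewrite <- !(diff2_red n u _ _ Hn).
    pose proof (diff2_nonneg n u z e). pose proof (diff2_nonneg n u z (zopp e)).
    pose proof (diff2_nonneg n u z f). pose proof (diff2_nonneg n u z (zopp f)). lra.
  - pose proof (lsum_nonneg (V_of (superbase_at sb n p)) (diff2 n u (zp p))
                  (fun x _ => diff2_nonneg _ _ _ _)). lra.
Qed.

Definition small_pairs : list ((nat * nat) * bool) :=
  filter (fun x => smallb (fst x)) (list_prod (grid n) [true; false]).
Definition stencil_pairs : list ((nat * nat) * zv) :=
  flat_map (fun w => map (fun a => (w, a)) (stencil D rb sb n w)) (grid n).

Lemma small_pairs_spec x : In x small_pairs ->
  In (fst x) (grid n) /\ small D rb n (fst x).
Proof.
  unfold small_pairs. intros H. apply filter_In in H. destruct H as [H1 H2].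
  destruct x as [p s]. apply in_prod_iff in H1. split; [tauto|].
  unfold smallb in H2. cbn [fst] in *. destruct Rle_dec; [assumption|discriminate].
Qed.

(* Both +-f belong to the stencil of the neighbour p + s e. *)
Lemma pair_energy_le x : In x small_pairs -> pair_energy x <= local_energy (shifted x).
Proof.
  intros Hx. destruct (small_pairs_spec x Hx) as [_ Hs]. destruct x as [p s].
  unfold pair_energy, shifted, local_energy. cbn [fst snd] in *.
  pose proof (Hrb (node n (fst p)) (node n (snd p))) as Hr. fold (basis_at rb n p) in Hr.
  destruct (basis_at rb n p) as [e f] eqn:Hef. cbn [fst snd] in *. destruct Hr as [Hb _].
  pose proof (neighbour_stencil D HDspd HDcont HDper rb Hrb sb Hsb n Hn Htau p e f (sgn s e) Hs Hef
                ltac:(destruct s; cbn; tauto)) as Hin.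
  destruct (basis_nonzero e f Hb) as [_ Hf0].
  assert (Hff : f <> zopp f) by (intro H; apply Hf0; destruct f; unfold zopp in H; inversion H; f_equal; lia).
  replace (diff2 n u _ f + diff2 n u _ (zopp f)) with
    (lsum [f; zopp f] (diff2 n u (zp (red n (zadd (zp p) (sgn s e)))))) by (unfold lsum; simpl; ring).
  apply (lsum_incl _ zv_eq_dec).
  - constructor; [cbn; intuition|constructor; [cbn; tauto|constructor]].
  - intros y Hy. apply Hin. unfold pm2. cbn [In] in Hy |- *. tauto.
  - intros; apply diff2_nonneg.
Qed.

(* The pair (neighbour, offset back to p) is a stencil pair, and it determines p. *)
Definition back_pair (x : (nat * nat) * bool) : (nat * nat) * zv :=
  (shifted x, sgn (snd x) (fst (basis_at rb n (fst x)))).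

Lemma back_pair_in x : In x small_pairs -> In (back_pair x) stencil_pairs.
Proof.
  intros Hx. destruct (small_pairs_spec x Hx) as [Hp Hs]. destruct x as [p s]. cbn [fst] in *.
  unfold stencil_pairs, back_pair. apply in_flat_map. exists (shifted (p, s)).
  split; [apply red_in_grid; exact Hn|].
  apply in_map_iff. eexists; split; [reflexivity|].
  unfold shifted. cbn [fst snd]. destruct (basis_at rb n p) as [e f] eqn:Hef. cbn [fst].
  apply (neighbour_stencil D HDspd HDcont HDper rb Hrb sb Hsb n Hn Htau p e f (sgn s e) Hs Hef);
    [destruct s; cbn; tauto|]. destruct s; cbn; tauto.
Qed.

(* Translation is injective on the grid, and e <> -e. *)
Lemma back_pair_inj x y : In x small_pairs -> In y small_pairs -> back_pair x = back_pair y -> x = y.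
Proof.
  intros Hx Hy H. destruct (small_pairs_spec x Hx) as [Hp _]. destruct (small_pairs_spec y Hy) as [Hp' _].
  destruct x as [p s], y as [p' s']. cbn [fst] in *. unfold back_pair, shifted in H. cbn [fst snd] in H.
  apply pair_equal_spec in H. destruct H as [H1 H2]. rewrite H2 in H1. apply red_translate_inj in H1; auto. subst p'.
  f_equal. pose proof (Hrb (node n (fst p)) (node n (snd p))) as Hr.
  fold (basis_at rb n p) in Hr.
  destruct (basis_at rb n p) as [e f]. destruct Hr as [Hb _]. destruct (basis_nonzero e f Hb) as [He0 _]. cbn [fst] in H2.
  destruct s, s'; auto; exfalso; apply He0; destruct e; unfold sgn, zopp in H2; inversion H2; f_equal; lia.
Qed.

Lemma stencil_length w : (length (stencil D rb sb n w) <= 6)%nat.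
Proof.
  unfold stencil, W_of. destruct Rle_dec.
  - destruct (basis_at rb n w); simpl; lia.
  - destruct (superbase_at sb n w) as [[a b] c]; simpl; lia.
Qed.

(* Each grid point is the neighbour of at most |W(w)| <= 6 small points. *)
Lemma extra_energy_sum_le : lsum (grid n) extra_energy <= 6 * lsum (grid n) local_energy.
Proof.
  assert (E1 : lsum (grid n) extra_energy = lsum small_pairs pair_energy).
  { transitivity (lsum (grid n) (fun a => lsum [true; false]
                    (fun b => if smallb a then pair_energy (a, b) else 0))).
    { apply lsum_ext. intros a _. unfold extra_energy, lsum; simpl. destruct (smallb a); ring. }
    rewrite lsum_prod. unfold small_pairs. rewrite <- lsum_filter. apply lsum_ext. intros [a b] _. reflexivity. }
  rewrite E1.
  apply Rle_trans with (lsum small_pairs (fun x => (fun q => local_energy (fst q)) (back_pair x))).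
  { apply lsum_le. apply pair_energy_le. }
  eapply Rle_trans.
  { apply (lsum_inj _ _ point_offset_eq_dec small_pairs stencil_pairs back_pair
             (fun q => local_energy (fst q))).
    - unfold small_pairs. apply NoDup_filter. apply NoDup_prod; [apply NoDup_grid|].
      constructor; [cbn; intuition discriminate|constructor; [cbn; tauto|constructor]].
    - apply back_pair_in.
    - apply back_pair_inj.
    - intros; apply local_energy_nonneg. }
  unfold stencil_pairs. rewrite lsum_flat_map, <- lsum_scal. apply lsum_le. intros w _.
  rewrite lsum_map. cbn [fst]. rewrite lsum_const.
  pose proof (le_INR _ _ (stencil_length w)) as Hlen. simpl in Hlen.
  pose proof (local_energy_nonneg w). nra.
Qed.

End Counting.

Theorem mainTheorem19
  (D : field)
  (HDspd : forall x y, spd (D x y))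
  (HDcont : field_continuous D)
  (HDper : field_periodic D)
  (rb : R -> R -> zv * zv)
  (Hrb : forall x y, reduced_basis (Mof D x y) (rb x y))
  (sb : R -> R -> zv * zv * zv)
  (Hsb : forall x y, obtuse_superbase (Mof D x y) (sb x y))
  (n : nat) (Hn : (1 <= n)%nat)
  (Htau : tau_h D (/ INR n) <= Rpower (1 + / (3 * kappaB D ^ 2)) (/ 4))
  (Htheta : theta_h D (/ INR n) <= / (4 * kappaB D))
  (u : Z -> Z -> R) :
  F'_h D rb sb n u <= 17 * F_h D rb sb n u.
Proof.
  unfold F'_h, F_h. rewrite !energy_as_grid_sum.
  change (lsum (grid n) (local_energy' D rb sb n u) <= 17 * lsum (grid n) (local_energy D rb sb n u)).
  apply Rle_trans with
    (lsum (grid n) (fun p => 5 * local_energy D rb sb n u p + 2 * extra_energy D rb n u p)).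
  - apply lsum_le. intros p _. exact (local_energy'_le D rb sb n Hn u p).
  - rewrite lsum_plus, !lsum_scal.
    pose proof (extra_energy_sum_le D HDspd HDcont HDper rb Hrb sb Hsb n Hn Htau u). lra.
Qed.
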